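(* Let $\Xi=(\xi_1,\dots,\xi_n)$ be a spanning family of vectors in $\mathbb R^k$. The infimum of $SH_\Xi(p)$ over all norms $p$ on $\mathbb R^k$ is positive and is attained at a norm of the form $q(x)=\max_i c_i|\xi_i\cdot x|$ for some $c_1,\dots,c_n\ge0$.
   Context: For a norm $p$ on $\mathbb R^k$, $p^*(v)=\max_{p(x)\le1}|x\cdot v|$ is its dual norm and $\mathrm{vol}(p)$ is the Lebesgue volume of its unit ball. Define $SH_\Xi(p)=\dfrac{\sum_{i=1}^n p^*(\xi_i)}{\mathrm{vol}(p)^{1/k}}$. *)

From Stdlib Require Import Reals Lra.
Open Scope R_scope.

(* Vectors of R^k are represented as functions nat -> R vanishing at
   indices >= k. *)
Definition inVk (k : nat) (x : nat -> R) : Prop :=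
  forall i, (k <= i)%nat -> x i = 0.

Fixpoint rsum (n : nat) (f : nat -> R) : R :=
  match n with O => 0 | S m => rsum m f + f m end.

Fixpoint rprod (n : nat) (f : nat -> R) : R :=
  match n with O => 1 | S m => rprod m f * f m end.

(* max_{i<n} f i (with value 0 for n = 0; only used for nonnegative f) *)
Fixpoint rmaxn (n : nat) (f : nat -> R) : R :=
  match n with O => 0 | S m => Rmax (rmaxn m f) (f m) end.

Definition dot (k : nat) (x y : nat -> R) : R := rsum k (fun i => x i * y i).

Definition is_norm (k : nat) (p : (nat -> R) -> R) : Prop :=
  (forall x, inVk k x -> p x = 0 -> forall i, x i = 0) /\
  (forall a x, inVk k x -> p (fun i => a * x i) = Rabs a * p x) /\
  (forall x y, inVk k x -> inVk k y -> p (fun i => x i + y i) <= p x + p y).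

Definition is_glb (E : R -> Prop) (m : R) : Prop :=
  (forall x, E x -> m <= x) /\ (forall b, (forall x, E x -> b <= x) -> b <= m).

Definition dual_norm (k : nat) (p : (nat -> R) -> R) (v : nat -> R) (d : R) : Prop :=
  is_lub (fun t => exists x, inVk k x /\ p x <= 1 /\ t = Rabs (dot k x v)) d.

Definition box_vol (k : nat) (a b : nat -> R) : R := rprod k (fun i => b i - a i).

Definition lebesgue_measure (k : nat) (K : (nat -> R) -> Prop) (v : R) : Prop :=
  is_glb (fun l => exists a b : nat -> nat -> R,
             (forall j i, a j i <= b j i) /\
             (forall x, inVk k x -> K x ->
                exists j, forall i, (i < k)%nat -> a j i <= x i <= b j i) /\
             infinite_sum (fun j => box_vol k (a j) (b j)) l) v.

Definition vol (k : nat) (p : (nat -> R) -> R) (v : R) : Prop :=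
  lebesgue_measure k (fun x => p x <= 1) v.

Definition SH (k n : nat) (xi : nat -> nat -> R) (p : (nat -> R) -> R) (s : R) : Prop :=
  exists (d : nat -> R) (v : R),
    (forall i, (i < n)%nat -> dual_norm k p (xi i) (d i)) /\
    vol k p v /\
    s = rsum n d / Rpower v (/ INR k).

Definition spans (k n : nat) (xi : nat -> nat -> R) : Prop :=
  (forall i, (i < n)%nat -> inVk k (xi i)) /\
  (forall v, inVk k v -> exists c : nat -> R,
     forall j, (j < k)%nat -> v j = rsum n (fun i => c i * xi i j)).

(** For t in R^n with t >= 0 put B_t = { x : |xi_i . x| <= t_i for all i }
    and let V(t) be its volume; B_t is the unit ball of the norm q_c with
    c_i = 1/t_i (c_i = 0 when t_i = 0).  If p is a norm and d_i = p^*(xi_i), the unit ball of p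
      lies in B_d, so vol(p) <= V(d) = T^k V(d/T) with T = sum_i d_i, whence
      SH(p) >= V(d/T)^(-1/k), where d/T lies in the simplex Delta.
    - Maximiser.  V is bounded, monotone and k-homogeneous on Delta, and
      V(t) is small when t_i is small for a nonzero xi_i (B_t then lies in a
      thin slab).  A maximising sequence has a cluster point ts (bisection),
      all of whose coordinates on nonzero xi_i are positive, and monotonicity
      plus homogeneity give V(ts) = sup_Delta V.
    - Optimality.  For q_ts = q_{1/ts} we have q_ts^*(xi_i) <= ts(i)
      and vol(q_ts) = V(ts), so SH(q_ts) <= V(ts)^(-1/k) <= SH(p)
      for every norm p; hence q_ts attains the (positive) infimum. *)

From Stdlib Require Import Reals Lra Lia ClassicalEpsilon FunctionalExtensionality Classical.
From Coquelicot Require Import Coquelicot.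
Open Scope R_scope.

Lemma rsum_ext n f g : (forall i, (i < n)%nat -> f i = g i) -> rsum n f = rsum n g.
Proof. induction n; simpl; intros H; auto. rewrite IHn, H; auto. Qed.

Lemma rsum_plus n f g : rsum n (fun i => f i + g i) = rsum n f + rsum n g.
Proof. induction n; simpl; [lra|]. rewrite IHn; lra. Qed.

Lemma rsum_scal n c f : rsum n (fun i => c * f i) = c * rsum n f.
Proof. induction n; simpl; [lra|]. rewrite IHn; lra. Qed.

Lemma rsum_minus n f g : rsum n (fun i => f i - g i) = rsum n f - rsum n g.
Proof. induction n; simpl; [lra|]. rewrite IHn; lra. Qed.

Lemma rsum_le n f g : (forall i, (i < n)%nat -> f i <= g i) -> rsum n f <= rsum n g.
Proof.
  induction n; simpl; intros H; [lra|].
  pose proof (H n ltac:(lia)). pose proof (IHn ltac:(intros; apply H; lia)). lra.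
Qed.

Lemma rsum_zero n f : (forall i, (i < n)%nat -> f i = 0) -> rsum n f = 0.
Proof.
  induction n; simpl; intros H; auto.
  rewrite IHn, H; try lra; try lia. intros; apply H; lia.
Qed.

Lemma rsum_nonneg n f : (forall i, (i < n)%nat -> 0 <= f i) -> 0 <= rsum n f.
Proof. intros H. rewrite <- (rsum_zero n (fun _ => 0)) by auto. apply rsum_le; auto. Qed.

Lemma rsum_abs n f : Rabs (rsum n f) <= rsum n (fun i => Rabs (f i)).
Proof.
  induction n; simpl; [rewrite Rabs_R0; lra|].
  eapply Rle_trans; [apply Rabs_triang | lra].
Qed.

Lemma rsum_ge_term n f j :
  (forall i, (i < n)%nat -> 0 <= f i) -> (j < n)%nat -> f j <= rsum n f.
Proof.
  induction n; simpl; intros H Hj; [lia|].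
  pose proof (rsum_nonneg n f ltac:(intros; apply H; lia)).
  destruct (Nat.eq_dec j n) as [->|]; [lra|].
  pose proof (IHn ltac:(intros; apply H; lia) ltac:(lia)). pose proof (H n ltac:(lia)). lra.
Qed.

Lemma rsum_swap n m (f : nat -> nat -> R) :
  rsum n (fun i => rsum m (fun j => f i j)) = rsum m (fun j => rsum n (fun i => f i j)).
Proof.
  induction n; simpl; [symmetry; apply rsum_zero; auto|].
  rewrite IHn, <- rsum_plus. reflexivity.
Qed.

Lemma rsum_const n c : rsum n (fun _ => c) = INR n * c.
Proof. induction n; [simpl; lra|]. rewrite S_INR; simpl; rewrite IHn; lra. Qed.

Lemma rsum_single k j c :
  (j < k)%nat -> rsum k (fun l => if Nat.eq_dec l j then c else 0) = c.
Proof.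
  induction k; intros Hj; [lia|]. simpl. destruct (Nat.eq_dec k j) as [->|].
  - rewrite rsum_zero; [lra|]. intros; destruct Nat.eq_dec; lia || auto.
  - rewrite IHk; lia || lra.
Qed.

Lemma rsum_tail f N M :
  (N <= M)%nat -> (forall j, (N <= j)%nat -> f j = 0) -> rsum M f = rsum N f.
Proof. induction 1; intros; auto. simpl. rewrite IHle, H0; auto. lra. Qed.

Lemma rmaxn_nonneg n f : 0 <= rmaxn n f.
Proof. induction n; simpl; [lra|]. eapply Rle_trans; [apply IHn | apply Rmax_l]. Qed.

Lemma rmaxn_ge n f i : (i < n)%nat -> f i <= rmaxn n f.
Proof.
  induction n; simpl; intros; [lia|]. destruct (Nat.eq_dec i n) as [->|]; [apply Rmax_r|].
  eapply Rle_trans; [apply IHn; lia | apply Rmax_l].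
Qed.

Lemma rmaxn_le n f b : 0 <= b -> (forall i, (i < n)%nat -> f i <= b) -> rmaxn n f <= b.
Proof. induction n; simpl; intros; auto. apply Rmax_lub; auto. Qed.

Lemma rmaxn_ext n f g : (forall i, (i < n)%nat -> f i = g i) -> rmaxn n f = rmaxn n g.
Proof. induction n; simpl; intros H; auto. rewrite IHn, H; auto. Qed.

Lemma rmaxn_scal n s f : 0 <= s -> rmaxn n (fun i => s * f i) = s * rmaxn n f.
Proof.
  intros Hs. induction n; simpl; [ring|]. rewrite IHn.
  unfold Rmax. destruct (Rle_dec (s * rmaxn n f) (s * f n)), (Rle_dec (rmaxn n f) (f n));
    try reflexivity; destruct (Req_dec s 0) as [->|]; try ring; exfalso; nra.
Qed.

Lemma rprod_ext n f g : (forall i, (i < n)%nat -> f i = g i) -> rprod n f = rprod n g.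
Proof. induction n; simpl; intros H; auto. rewrite IHn, H; auto. Qed.

Lemma rprod_nonneg n f : (forall i, (i < n)%nat -> 0 <= f i) -> 0 <= rprod n f.
Proof. induction n; simpl; intros H; [lra|]. apply Rmult_le_pos; auto. Qed.

Lemma rprod_le n f g : (forall i, (i < n)%nat -> 0 <= f i <= g i) -> rprod n f <= rprod n g.
Proof.
  induction n; simpl; intros H; [lra|].
  apply Rmult_le_compat; try apply rprod_nonneg; try apply IHn; intros; apply H; lia.
Qed.

Lemma rprod_const n c : rprod n (fun _ => c) = c ^ n.
Proof. induction n; simpl; auto. rewrite IHn; ring. Qed.

Lemma rprod_scal n c f : rprod n (fun i => c * f i) = c ^ n * rprod n f.
Proof. induction n; simpl; [ring|]. rewrite IHn; ring. Qed.

Lemma rprod_split n j f g h : (j < n)%nat -> f j = g j + h j ->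
  (forall i, (i < n)%nat -> i <> j -> f i = g i /\ f i = h i) ->
  rprod n f = rprod n g + rprod n h.
Proof.
  induction n; simpl; intros Hj E H; [lia|]. destruct (Nat.eq_dec j n) as [->|].
  - rewrite (rprod_ext n g f), (rprod_ext n h f), E; [ring| |];
      intros i Hi; destruct (H i); auto; lia.
  - rewrite IHn; auto; try lia. destruct (H n) as [<- <-]; auto; ring.
Qed.

Lemma rprod_one_diff n j f c : (j < n)%nat ->
  (forall i, (i < n)%nat -> i <> j -> f i = c) -> rprod n f = c ^ (n - 1) * f j.
Proof.
  induction n; simpl; intros Hj H; [lia|]. rewrite Nat.sub_0_r.
  destruct (Nat.eq_dec j n) as [->|].
  - rewrite (rprod_ext n f (fun _ => c)), rprod_const; [ring|]. intros; apply H; lia.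
  - rewrite IHn, (H n); try lia; [|intros; apply H; lia].
    destruct n; [lia|]. simpl. rewrite Nat.sub_0_r. ring.
Qed.

Lemma exists_pow2 D r : 0 < r -> exists q, D / 2 ^ q < r.
Proof.
  intros Hr. destruct (INR_archimed r D Hr) as [q Hq]. exists q.
  assert (Hpow : INR q <= 2 ^ q).
  { clear Hq. induction q; [simpl; lra|]. rewrite S_INR. simpl.
    assert (1 <= 2 ^ q) by (apply pow_R1_Rle; lra). lra. }
  assert (0 < 2 ^ q) by (apply pow_lt; lra). apply (Rmult_lt_reg_r (2 ^ q)); auto.
  unfold Rdiv; rewrite Rmult_assoc, Rinv_l by lra. nra.
Qed.

Lemma pow_bern e k : 0 <= e <= 1 -> (1 + e) ^ k <= 1 + e * 2 ^ k.
Proof.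
  intros He. assert ((1 + e) ^ k <= 1 + e * (2 ^ k - 1)); [|lra].
  induction k; simpl; [lra|]. assert (1 <= 2 ^ k) by (apply pow_R1_Rle; lra).
  assert (e * e <= e) by nra. nra.
Qed.

Lemma zero_by_eps a C : 0 <= C -> (forall eta, 0 < eta -> Rabs a <= C * eta) -> a = 0.
Proof.
  intros HC H. destruct (Req_dec a 0) as [E|E]; auto. exfalso.
  pose proof (Rabs_pos_lt a E).
  assert (He : 0 < Rabs a / (2 * (C + 1))) by (apply Rdiv_lt_0_compat; lra).
  specialize (H _ He).
  assert (C * (Rabs a / (2 * (C + 1))) <= Rabs a / 2); [|lra].
  replace (C * (Rabs a / (2 * (C + 1)))) with (Rabs a / 2 * (C / (C + 1))) by (field; lra).
  assert (C / (C + 1) <= 1).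
  { apply (Rmult_le_reg_r (C + 1)); [lra|]. unfold Rdiv; rewrite Rmult_assoc, Rinv_l; lra. }
  assert (0 <= C / (C + 1)) by (apply Rdiv_le_0_compat; lra). nra.
Qed.

Lemma Rpower_pow_inv k T : (0 < k)%nat -> 0 < T -> Rpower (T ^ k) (/ INR k) = T.
Proof.
  intros Hk HT. rewrite <- Rpower_pow, Rpower_mult, Rinv_r by (auto; apply not_0_INR; lia).
  apply Rpower_1; auto.
Qed.

Lemma rprod_enlarge k w : (forall i, (i < k)%nat -> 0 <= w i) -> forall eps, 0 < eps ->
  exists rho, 0 < rho /\ rprod k (fun i => w i + 2 * rho) <= rprod k w + eps.
Proof.
  induction k; intros Hw eps He; [exists 1; simpl; lra|].
  set (Pk := rprod k w). assert (HP : 0 <= Pk) by (apply rprod_nonneg; intros; apply Hw; lia).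
  assert (Hwk : 0 <= w k) by (apply Hw; lia).
  set (e1 := eps / (2 * (w k + 1))).
  assert (He1 : 0 < e1) by (apply Rdiv_lt_0_compat; lra).
  destruct (IHk ltac:(intros; apply Hw; lia) e1 He1) as [r1 [Hr1 H1]].
  set (r := Rmin r1 (eps / (4 * (Pk + e1 + 1)))).
  assert (Hr2 : r <= eps / (4 * (Pk + e1 + 1))) by apply Rmin_r.
  assert (Hr : 0 < r) by (apply Rmin_glb_lt; auto; apply Rdiv_lt_0_compat; lra).
  exists r; split; auto. simpl. fold Pk.
  assert (A : rprod k (fun i => w i + 2 * r) <= Pk + e1).
  { eapply Rle_trans; [|apply H1]. apply rprod_le. intros i Hi.
    pose proof (Hw i ltac:(lia)).
    pose proof (Rmin_l r1 (eps / (4 * (Pk + e1 + 1)))) as Hm. fold r in Hm. lra. }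
  assert (B : 0 <= rprod k (fun i => w i + 2 * r))
    by (apply rprod_nonneg; intros; pose proof (Hw i ltac:(lia)); lra).
  assert (D : e1 * w k <= eps / 2).
  { unfold e1.
    replace (eps / (2 * (w k + 1)) * w k) with (eps / 2 * (w k / (w k + 1))) by (field; lra).
    assert (w k / (w k + 1) <= 1).
    { apply (Rmult_le_reg_r (w k + 1)); [lra|]. unfold Rdiv; rewrite Rmult_assoc, Rinv_l; lra. }
    assert (0 <= w k / (w k + 1)) by (apply Rdiv_le_0_compat; lra). nra. }
  assert (E : 2 * r * (Pk + e1 + 1) <= eps / 2).
  { apply Rle_trans with (2 * (eps / (4 * (Pk + e1 + 1))) * (Pk + e1 + 1)); [nra|].
    apply Req_le; field; lra. }
  nra.
Qed.

Lemma common_delta n (Q : nat -> R -> Prop) :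
  (forall i, (i < n)%nat -> exists d, 0 < d /\ Q i d) ->
  (forall i d d', Q i d -> 0 < d' <= d -> Q i d') ->
  exists d, 0 < d /\ forall i, (i < n)%nat -> Q i d.
Proof.
  intros H Hm. induction n; [exists 1; split; [lra| intros; lia]|].
  destruct IHn as [d1 [Hd1 H1]]; [intros; apply H; lia|].
  destruct (H n ltac:(lia)) as [d2 [Hd2 H2]].
  exists (Rmin d1 d2). split; [apply Rmin_glb_lt; auto|]. intros i Hi.
  assert (0 < Rmin d1 d2) by (apply Rmin_glb_lt; auto).
  destruct (Nat.eq_dec i n) as [->|].
  - apply (Hm n d2); auto. split; auto. apply Rmin_r.
  - apply (Hm i d1); [apply H1; lia|]. split; auto. apply Rmin_l.
Qed.

Lemma grid_cell N h y : (0 < N)%nat -> 0 < h -> 0 <= y <= INR N * h ->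
  exists m, (m < N)%nat /\ INR m * h <= y <= INR (S m) * h.
Proof.
  induction N; intros HN Hh Hy; [lia|]. destruct (Nat.eq_dec N 0) as [->|].
  - exists 0%nat; split; auto. simpl in *; lra.
  - destruct (Rle_dec y (INR N * h)).
    + destruct IHN as [m [Hm1 Hm2]]; auto; try lia; try lra. exists m; split; auto.
    + exists N; split; auto. rewrite S_INR in *. lra.
Qed.

Fixpoint digits_enc (M : nat -> nat) (N k : nat) : nat :=
  match k with O => O | S k => digits_enc M N k + M k * N ^ k end.

Lemma digits_enc_spec M N k : (0 < N)%nat -> (forall l, (l < k)%nat -> (M l < N)%nat) ->
  (digits_enc M N k < N ^ k)%nat /\
  forall l, (l < k)%nat -> ((digits_enc M N k / N ^ l) mod N)%nat = M l.
Proof.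
  intros HN. induction k; intros HM; simpl; [split; [lia| intros; lia]|].
  destruct IHk as [H1 H2]; [intros; apply HM; lia|]. set (E := digits_enc M N k) in *.
  assert (HP : (0 < N ^ k)%nat) by (apply Nat.neq_0_lt_0, Nat.pow_nonzero; lia).
  split; [assert (M k <= N - 1)%nat by (specialize (HM k); lia); nia|].
  intros l Hl. destruct (Nat.eq_dec l k) as [->|].
  - rewrite Nat.div_add, Nat.div_small by lia. apply Nat.mod_small, HM; lia.
  - replace (N ^ k)%nat with (N ^ (k - l - 1) * N * N ^ l)%nat.
    + rewrite Nat.mul_assoc, Nat.div_add, Nat.mul_assoc, Nat.Div0.mod_add by
        (apply Nat.pow_nonzero; lia). apply H2; lia.
    + symmetry. replace k with (k - l - 1 + 1 + l)%nat at 1 by lia.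
      rewrite !Nat.pow_add_r, Nat.pow_1_r. reflexivity.
Qed.

Definition ev (j : nat) : nat -> R := fun i => if Nat.eq_dec i j then 1 else 0.
Definition zerov : nat -> R := fun _ => 0.

Lemma inVk_ev k j : (j < k)%nat -> inVk k (ev j).
Proof. intros Hj i Hi; unfold ev; destruct Nat.eq_dec; lia || auto. Qed.

Lemma inVk_scal k a x : inVk k x -> inVk k (fun i => a * x i).
Proof. intros H i Hi; rewrite H; auto; ring. Qed.

Lemma inVk_zero k : inVk k zerov.
Proof. intros i _; reflexivity. Qed.

Lemma dot_comm k x y : dot k x y = dot k y x.
Proof. unfold dot; apply rsum_ext; intros; ring. Qed.

Lemma dot_lin_r k x a y b z :
  dot k x (fun i => a * y i + b * z i) = a * dot k x y + b * dot k x z.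
Proof. unfold dot. rewrite <- !rsum_scal, <- rsum_plus. apply rsum_ext; intros; ring. Qed.

Lemma dot_scal_r k x a y : dot k x (fun i => a * y i) = a * dot k x y.
Proof. unfold dot. rewrite <- rsum_scal. apply rsum_ext; intros; ring. Qed.

Lemma dot_scal_l k a x w : dot k (fun i => a * x i) w = a * dot k x w.
Proof. rewrite dot_comm, dot_scal_r, dot_comm; auto. Qed.

Lemma dot_zero_r k x w : (forall l, (l < k)%nat -> w l = 0) -> dot k x w = 0.
Proof. intros H; unfold dot; apply rsum_zero; intros; rewrite H; auto; ring. Qed.

Lemma dot_zero_l k w : dot k zerov w = 0.
Proof. rewrite dot_comm. apply dot_zero_r. reflexivity. Qed.

Lemma dot_ev k j x : (j < k)%nat -> dot k (ev j) x = x j.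
Proof.
  intros Hj. unfold dot. rewrite <- (rsum_single k j (x j)); auto.
  apply rsum_ext; intros; unfold ev; destruct Nat.eq_dec; subst; ring.
Qed.

Lemma dot_abs_le k x y : Rabs (dot k x y) <= rsum k (fun i => Rabs (x i) * Rabs (y i)).
Proof.
  eapply Rle_trans; [apply rsum_abs|]. apply rsum_le; intros. rewrite Rabs_mult; lra.
Qed.

(** ** Bisection: a compactness principle for boxes

    Let P be a property of boxes [a, b] in R^d such that whenever P holds
    for a box, it holds for one of the two halves obtained by bisecting any
    side.  Halving the sides cyclically from a box with P yields nested boxes
    with P whose sides shrink to 0; they all contain a common point. *)

Definition upd (f : nat -> R) (i : nat) (v : R) : nat -> R :=
  fun l => if Nat.eq_dec l i then v else f l.

Section Bisection.
Variable d : nat.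
Hypothesis Hd : (0 < d)%nat.
Variable P : (nat -> R) -> (nat -> R) -> Prop.
Variables a0 b0 : nat -> R.
Hypothesis Hab0 : forall i, (i < d)%nat -> a0 i <= b0 i.
Hypothesis HP0 : P a0 b0.
Hypothesis HPsplit : forall a b i, (i < d)%nat -> (forall l, (l < d)%nat -> a l <= b l) -> P a b ->
  P a (upd b i ((a i + b i) / 2)) \/ P (upd a i ((a i + b i) / 2)) b.

Definition bisect_step (m : nat) (ab : (nat -> R) * (nat -> R)) : (nat -> R) * (nat -> R) :=
  let (a, b) := ab in
  let i := (m mod d)%nat in
  let g := (a i + b i) / 2 in
  if excluded_middle_informative (P a (upd b i g)) then (a, upd b i g) else (upd a i g, b).

Fixpoint bisect_seq (m : nat) : (nat -> R) * (nat -> R) :=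
  match m with O => (a0, b0) | S m => bisect_step m (bisect_seq m) end.

Lemma mod_lt m : ((m mod d) < d)%nat.
Proof. apply Nat.mod_upper_bound; lia. Qed.

Lemma bisect_seq_inv m : P (fst (bisect_seq m)) (snd (bisect_seq m)) /\
  (forall i, (i < d)%nat -> fst (bisect_seq m) i <= snd (bisect_seq m) i).
Proof.
  induction m; simpl; auto. destruct (bisect_seq m) as [a b], IHm as [H1 H2]; simpl in *.
  unfold bisect_step. pose proof (mod_lt m). pose proof (H2 _ (mod_lt m)).
  destruct (excluded_middle_informative _); simpl;
    (split; [|intros l Hl; unfold upd; destruct Nat.eq_dec; subst; auto; lra]); auto.
  destruct (HPsplit a b (m mod d)); tauto.
Qed.

Lemma bisect_seq_step m i :
  fst (bisect_seq m) i <= fst (bisect_seq (S m)) i /\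
  snd (bisect_seq (S m)) i <= snd (bisect_seq m) i /\
  snd (bisect_seq (S m)) i - fst (bisect_seq (S m)) i =
  (snd (bisect_seq m) i - fst (bisect_seq m) i) / (if Nat.eq_dec i (m mod d) then 2 else 1).
Proof.
  simpl. pose proof (proj2 (bisect_seq_inv m) _ (mod_lt m)).
  destruct (bisect_seq m) as [a b]; simpl in *. unfold bisect_step.
  destruct (excluded_middle_informative _); simpl; unfold upd;
    destruct (Nat.eq_dec i (m mod d)); subst; lra.
Qed.

Lemma bisect_seq_mono m m' i : (m <= m')%nat ->
  fst (bisect_seq m) i <= fst (bisect_seq m') i /\ snd (bisect_seq m') i <= snd (bisect_seq m) i.
Proof. induction 1; [lra|]. pose proof (bisect_seq_step m0 i). lra. Qed.

(* After q full rounds plus t further steps, sides i < t have been halved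
   q + 1 times and the others q times. *)
Definition width_after (q t i : nat) : R :=
  (b0 i - a0 i) / 2 ^ q * (if Nat.ltb i t then /2 else 1).

Lemma bisect_seq_width_S q t i : (t < d)%nat ->
  snd (bisect_seq (q * d + t)) i - fst (bisect_seq (q * d + t)) i = width_after q t i ->
  snd (bisect_seq (q * d + S t)) i - fst (bisect_seq (q * d + S t)) i = width_after q (S t) i.
Proof.
  intros Ht IH. replace (q * d + S t)%nat with (S (q * d + t)) by lia.
  rewrite (proj2 (proj2 (bisect_seq_step _ i))), IH.
  replace ((q * d + t) mod d)%nat with t
    by (rewrite Nat.add_comm, Nat.Div0.mod_add, Nat.mod_small; lia).
  unfold width_after.
  destruct (Nat.eq_dec i t), (Nat.ltb_spec0 i t), (Nat.ltb_spec0 i (S t)); try lia; lra.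
Qed.

Lemma bisect_seq_width q t i : (t <= d)%nat -> (i < d)%nat ->
  snd (bisect_seq (q * d + t)) i - fst (bisect_seq (q * d + t)) i = width_after q t i.
Proof.
  intros Ht0 Hi. revert t Ht0. induction q; intros t; induction t; intros Ht;
    try (apply bisect_seq_width_S; [lia| apply IHt; lia]).
  - unfold width_after. destruct (Nat.ltb_spec0 i 0); [lia|]. simpl. lra.
  - replace (S q * d + 0)%nat with (q * d + d)%nat by lia. rewrite (IHq d) by lia.
    unfold width_after. destruct (Nat.ltb_spec0 i d), (Nat.ltb_spec0 i 0); try lia.
    simpl. field. apply pow_nonzero; lra.
Qed.
Lemma bisect_seq_ab m m' i : (i < d)%nat -> fst (bisect_seq m) i <= snd (bisect_seq m') i.
Proof.
  intros Hi. destruct (bisect_seq_mono m (Nat.max m m') i) as [H1 _]; [lia|].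
  destruct (bisect_seq_mono m' (Nat.max m m') i) as [_ H2]; [lia|].
  pose proof (proj2 (bisect_seq_inv (Nat.max m m')) i Hi). lra.
Qed.

Definition bisect_limit (i : nat) : R :=
  epsilon (inhabits 0) (is_lub (fun y => exists m, y = fst (bisect_seq m) i)).

Lemma bisect_limit_in m i : (i < d)%nat ->
  fst (bisect_seq m) i <= bisect_limit i <= snd (bisect_seq m) i.
Proof.
  intros Hi. assert (Hlub : is_lub (fun y => exists m, y = fst (bisect_seq m) i) (bisect_limit i)).
  { unfold bisect_limit. apply epsilon_spec.
    destruct (completeness (fun y => exists m, y = fst (bisect_seq m) i)) as [x Hx].
    - exists (snd (bisect_seq 0) i). intros y [m' ->]. apply bisect_seq_ab; auto.
    - exists (fst (bisect_seq 0) i), 0%nat; auto.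
    - exists x; exact Hx. }
  destruct Hlub as [H1 H2]. split; [apply H1; exists m; auto|].
  apply H2. intros y [m' ->]. apply bisect_seq_ab; auto.
Qed.
End Bisection.

Lemma bisect (d : nat) (P : (nat -> R) -> (nat -> R) -> Prop) a0 b0 : (0 < d)%nat ->
  (forall i, (i < d)%nat -> a0 i <= b0 i) -> P a0 b0 ->
  (forall a b i, (i < d)%nat -> (forall l, (l < d)%nat -> a l <= b l) -> P a b ->
     P a (upd b i ((a i + b i) / 2)) \/ P (upd a i ((a i + b i) / 2)) b) ->
  exists x : nat -> R, forall q, exists a b, P a b /\
    forall i, (i < d)%nat -> a i <= x i <= b i /\ b i - a i = (b0 i - a0 i) / 2 ^ q
      /\ a0 i <= a i /\ b i <= b0 i.
Proof.
  intros Hd H1 H2 H3. exists (bisect_limit d P a0 b0). intros q.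
  exists (fst (bisect_seq d P a0 b0 (q * d))), (snd (bisect_seq d P a0 b0 (q * d))).
  split; [apply bisect_seq_inv; auto|]. intros i Hi.
  split; [apply bisect_limit_in; auto|]. split.
  - rewrite <- (Nat.add_0_r (q * d)), bisect_seq_width by (auto; lia).
    unfold width_after. destruct (Nat.ltb_spec0 i 0); [lia|]. lra.
  - apply (bisect_seq_mono d Hd P a0 b0 H1 H2 H3 0 (q * d) i). lia.
Qed.

Definition cluster_of (n : nat) (u : nat -> nat -> R) (x : nat -> R) : Prop :=
  forall eta, 0 < eta -> forall N, exists m, (N <= m)%nat /\
    forall i, (i < n)%nat -> Rabs (u m i - x i) <= eta.

(* Bolzano-Weierstrass in [0,1]^n: bisect while keeping infinitely many
   terms of the sequence in the box. *)
Lemma cluster_point n (u : nat -> nat -> R) :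
  (forall m i, (i < n)%nat -> 0 <= u m i <= 1) -> exists x, cluster_of n u x.
Proof.
  intros Hu. destruct (Nat.eq_dec n 0) as [->|Hn].
  { exists zerov. intros eta _ N. exists N. split; auto. intros; lia. }
  set (P := fun a b : nat -> R => forall N, exists m, (N <= m)%nat /\
    forall i, (i < n)%nat -> a i <= u m i <= b i).
  destruct (bisect n P (fun _ => 0) (fun _ => 1)) as [x Hx]; [lia| intros; lra| | |].
  - intros N; exists N; split; auto.
  - intros a b i Hi Hab HP. apply NNPP; intros Hno.
    apply not_or_and in Hno as [H1 H2].
    apply not_all_ex_not in H1 as [N1 H1]. apply not_all_ex_not in H2 as [N2 H2].
    destruct (HP (Nat.max N1 N2)) as [m [Hm Hin]].
    destruct (Rle_dec (u m i) ((a i + b i) / 2)); [apply H1| apply H2]; exists m;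
      (split; [lia|]); intros l Hl; unfold upd;
      destruct Nat.eq_dec; subst; pose proof (Hin _ Hl); lra.
  - exists x. intros eta He N. destruct (exists_pow2 1 eta He) as [q Hq].
    destruct (Hx q) as [a [b [HP Hb]]]. destruct (HP N) as [m [Hm Hin]].
    exists m; split; auto. intros i Hi. destruct (Hb i Hi) as [[A B] [W _]].
    specialize (Hin i Hi). replace (1 - 0) with 1 in W by ring. apply Rabs_le. lra.
Qed.

Lemma cluster_coord_ge n u x i a : cluster_of n u x -> (i < n)%nat ->
  (forall m, a <= u m i) -> a <= x i.
Proof.
  intros Hx Hi Ha. apply Rnot_lt_le; intros Hlt.
  destruct (Hx ((a - x i) / 2) ltac:(lra) 0%nat) as [m [_ Hm]].
  specialize (Hm i Hi). apply Rabs_le_between in Hm. specialize (Ha m). lra.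
Qed.

Lemma inf_sum_finite f N : (forall j, (N <= j)%nat -> f j = 0) -> infinite_sum f (rsum N f).
Proof.
  intros H eps Heps. exists N. intros n Hn.
  assert (E : forall m, sum_f_R0 f m = rsum (S m) f).
  { induction m; simpl in *; [lra| rewrite IHm; reflexivity]. }
  rewrite E, (rsum_tail f N (S n)); auto. unfold R_dist. rewrite Rminus_diag, Rabs_R0; lra.
Qed.

Lemma inf_sum_nonneg f l : (forall j, 0 <= f j) -> infinite_sum f l -> 0 <= l.
Proof.
  intros H Hl. apply is_series_Reals in Hl. rewrite <- (is_series_unique _ _ Hl).
  rewrite <- (Rmult_0_l (Series f)), <- Series_scal_l. apply Series_le; [|eexists; eauto].
  intros; rewrite Rmult_0_l; split; auto; lra.
Qed.

Lemma inf_sum_scal c f l : infinite_sum f l -> infinite_sum (fun j => c * f j) (c * l).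
Proof.
  intros H. apply is_series_Reals. apply is_series_Reals in H.
  apply (is_series_scal_l c) in H. exact H.
Qed.

Lemma series_ge_term f j : (forall n, 0 <= f n) -> ex_series f -> f j <= Series f.
Proof.
  intros H Hf. set (g := fun n => if Nat.eq_dec n j then f j else 0).
  assert (Hg : Series g = f j).
  { apply is_series_unique, is_series_Reals.
    replace (f j) with (rsum (S j) g).
    - apply inf_sum_finite. intros; unfold g; destruct Nat.eq_dec; lia || auto.
    - simpl. rewrite rsum_zero; unfold g; [destruct Nat.eq_dec; [lra| lia]|].
      intros; destruct Nat.eq_dec; lia || auto. }
  rewrite <- Hg. apply Series_le; auto.
  intros; unfold g; destruct Nat.eq_dec; subst; split; auto; lra.
Qed.

Lemma ex_series_nonneg_le f g : (forall n, 0 <= f n <= g n) -> ex_series g -> ex_series f.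
Proof.
  intros H Hg. apply (ex_series_le f g); auto. intros n. unfold norm; simpl; unfold abs; simpl.
  rewrite Rabs_pos_eq; apply H.
Qed.

(** ** Outer measure by countable box covers *)

Lemma glb_exists (E : R -> Prop) b :
  (exists x, E x) -> (forall x, E x -> b <= x) -> exists m, is_glb E m.
Proof.
  intros [x0 Hx0] Hb. destruct (completeness (fun y => E (- y))) as [M [H1 H2]].
  - exists (- b). intros y Hy. specialize (Hb _ Hy). lra.
  - exists (- x0). rewrite Ropp_involutive; auto.
  - exists (- M). split.
    + intros x Hx. assert (- x <= M) by (apply H1; rewrite Ropp_involutive; auto). lra.
    + intros c Hc. assert (M <= - c); [|lra]. apply H2. intros y Hy. specialize (Hc _ Hy). lra.
Qed.

Definition cover_sum (k : nat) (K : (nat -> R) -> Prop) : R -> Prop :=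
  fun l => exists a b : nat -> nat -> R,
    (forall j i, a j i <= b j i) /\
    (forall x, inVk k x -> K x -> exists j, forall i, (i < k)%nat -> a j i <= x i <= b j i) /\
    infinite_sum (fun j => box_vol k (a j) (b j)) l.

Lemma box_vol_nonneg k a b : (forall i, a i <= b i) -> 0 <= box_vol k a b.
Proof. intros; unfold box_vol; apply rprod_nonneg; intros; specialize (H i); lra. Qed.

Lemma cover_sum_nonneg k K l : cover_sum k K l -> 0 <= l.
Proof.
  intros [a [b [H1 [_ H3]]]]. eapply inf_sum_nonneg; eauto. intros; apply box_vol_nonneg; auto.
Qed.

Lemma measure_nonneg k K v : lebesgue_measure k K v -> 0 <= v.
Proof. intros [_ H]. apply H. apply cover_sum_nonneg. Qed.

Lemma measure_le_cover k K v l : lebesgue_measure k K v -> cover_sum k K l -> v <= l.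
Proof. intros [H _]; auto. Qed.

Lemma measure_unique k K v1 v2 : lebesgue_measure k K v1 -> lebesgue_measure k K v2 -> v1 = v2.
Proof. intros [A1 B1] [A2 B2]. apply Rle_antisym; [apply B2|apply B1]; auto. Qed.

Lemma measure_mono k K1 K2 v1 v2 : (forall x, inVk k x -> K1 x -> K2 x) ->
  lebesgue_measure k K1 v1 -> lebesgue_measure k K2 v2 -> v1 <= v2.
Proof.
  intros H [A1 B1] [A2 B2]. apply B2. intros l [a [b [C1 [C2 C3]]]]. apply A1.
  exists a, b; repeat split; auto.
Qed.

Lemma measure_ext k K1 K2 v : (forall x, inVk k x -> (K1 x <-> K2 x)) ->
  lebesgue_measure k K1 v -> lebesgue_measure k K2 v.
Proof.
  intros H [A B]. assert (E : forall l, cover_sum k K2 l -> cover_sum k K1 l).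
  { intros l [a [b [C1 [C2 C3]]]]. exists a, b; repeat split; auto.
    intros x Hx Kx. apply C2, H; auto. }
  split; [intros l Hl; apply A, E, Hl|].
  intros c Hc. apply B. intros l [a [b [C1 [C2 C3]]]]. apply Hc. exists a, b; repeat split; auto.
  intros x Hx Kx. apply C2, H; auto.
Qed.

Lemma measure_exists_bounded k K L : (0 < k)%nat -> 0 <= L ->
  (forall x, inVk k x -> K x -> forall i, (i < k)%nat -> - L <= x i <= L) ->
  exists v, lebesgue_measure k K v /\ v <= (2 * L) ^ k.
Proof.
  intros Hk HL H. set (a := fun j (_ : nat) => if Nat.eq_dec j 0 then - L else 0).
  set (b := fun j (_ : nat) => if Nat.eq_dec j 0 then L else 0).
  assert (Hcov : cover_sum k K ((2 * L) ^ k)).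
  { exists a, b. split; [intros; unfold a, b; destruct Nat.eq_dec; lra|]. split.
    - intros x Hx Kx; exists 0%nat; intros; apply H; auto.
    - replace ((2 * L) ^ k) with (rsum 1 (fun j => box_vol k (a j) (b j))).
      + apply inf_sum_finite. intros j Hj. unfold box_vol, a, b. destruct Nat.eq_dec; [lia|].
        rewrite (rprod_ext k _ (fun _ => 0)), rprod_const by (intros; lra). apply pow_i; auto.
      + simpl. unfold box_vol, a, b. rewrite (rprod_ext k _ (fun _ => 2 * L)), rprod_const; [lra|].
        intros; simpl; lra. }
  destruct (glb_exists (cover_sum k K) 0) as [v Hv]; [eexists; eauto| apply cover_sum_nonneg|].
  exists v; split; auto. eapply measure_le_cover; eauto.
Qed.

Definition dilate (lam : R) (K : (nat -> R) -> Prop) : (nat -> R) -> Prop :=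
  fun x => K (fun i => x i / lam).

Lemma cover_sum_dilate k K1 K2 lam l : 0 < lam ->
  (forall x, inVk k x -> K2 x -> K1 (fun i => x i / lam)) ->
  cover_sum k K1 l -> cover_sum k K2 (lam ^ k * l).
Proof.
  intros Hl H [a [b [C1 [C2 C3]]]].
  exists (fun j i => lam * a j i), (fun j i => lam * b j i).
  split; [intros; apply Rmult_le_compat_l; auto; lra|]. split.
  - intros x Hx K2x. destruct (C2 (fun i => x i / lam)) as [j Hj]; auto.
    { intros i Hi; rewrite Hx; auto; lra. }
    exists j. intros i Hi. specialize (Hj i Hi).
    replace (x i) with (lam * (x i / lam)) by (field; lra). split; apply Rmult_le_compat_l; lra.
  - replace (fun j => box_vol k (fun i => lam * a j i) (fun i => lam * b j i)) with
      (fun j => lam ^ k * box_vol k (a j) (b j)); [apply inf_sum_scal; auto|].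
    apply functional_extensionality; intros j. unfold box_vol. rewrite <- rprod_scal.
    apply rprod_ext; intros; ring.
Qed.

Lemma measure_dilate k K lam v : 0 < lam ->
  lebesgue_measure k K v -> lebesgue_measure k (dilate lam K) (lam ^ k * v).
Proof.
  intros Hlam [A B]. assert (Hp : 0 < lam ^ k) by (apply pow_lt; auto). split.
  - intros l' Hl'. apply (cover_sum_dilate k _ K (/ lam)) in Hl'.
    + assert (v <= / lam ^ k * l') by (apply A; rewrite pow_inv in Hl'; auto).
      apply (Rmult_le_compat_l (lam ^ k)) in H; [|lra]. rewrite <- Rmult_assoc, Rinv_r in H; lra.
    + apply Rinv_0_lt_compat; auto.
    + intros x Hx Kx. unfold dilate. replace (fun i => x i / / lam / lam) with x; auto.
      apply functional_extensionality; intros; field; lra.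
  - intros b Hb. assert (b / lam ^ k <= v).
    + apply B. intros l Hl. apply (cover_sum_dilate k K (dilate lam K) lam) in Hl; auto.
      specialize (Hb _ Hl). apply (Rmult_le_reg_l (lam ^ k)); auto. unfold Rdiv.
      rewrite <- Rmult_assoc, (Rmult_comm _ b), Rmult_assoc, Rinv_r; lra.
    + apply (Rmult_le_compat_l (lam ^ k)) in H; [|lra]. unfold Rdiv in H.
      rewrite Rmult_comm, Rmult_assoc, Rinv_l in H; lra.
Qed.

(** ** A box has measure at least its volume

    Suppose countably many boxes [a_j, b_j] cover the box [al, be] but have
    total volume l < vol [al, be].  Enlarge each box slightly so that the
    total stays below vol [al, be], and call a sub-box [al', be'] bad when
    the enlarged boxes cover less than its volume (measured through the
    volumes of the intersections).  Badness passes to one half of any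
    bisection, so bisection produces a point x lying in arbitrarily small bad
    boxes; but x lies in some [a_j, b_j], whose enlargement then contains a
    whole small bad box, a contradiction. *)

Section BoxLowerBound.
Variable k : nat.
Hypothesis Hk : (0 < k)%nat.
Variables al be : nat -> R.
Hypothesis Halbe : forall i, (i < k)%nat -> al i <= be i.
Variables a b : nat -> nat -> R.
Hypothesis Hab : forall j i, a j i <= b j i.
Hypothesis Hcov : forall x, inVk k x -> (forall i, (i < k)%nat -> al i <= x i <= be i) ->
  exists j, forall i, (i < k)%nat -> a j i <= x i <= b j i.
Variable l : R.
Hypothesis Hl : infinite_sum (fun j => box_vol k (a j) (b j)) l.
Hypothesis Hlt : l < box_vol k al be.

Let eta := box_vol k al be - l.

(* Box j is enlarged by rho j on each side, costing at most eta / 4 / 2^j. *)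
Definition gap_bound (j : nat) : R := box_vol k (a j) (b j) + eta / 4 * (/ 2) ^ j.

Definition rho (j : nat) : R := epsilon (inhabits 1) (fun r => 0 < r /\
  rprod k (fun i => (b j i - a j i) + 2 * r) <= gap_bound j).

Lemma rho_spec j : 0 < rho j /\ rprod k (fun i => (b j i - a j i) + 2 * rho j) <= gap_bound j.
Proof.
  unfold rho. apply epsilon_spec, rprod_enlarge; [intros; specialize (Hab j i); lra|].
  apply Rmult_lt_0_compat; [unfold eta; lra| apply pow_lt; lra].
Qed.

Definition enlarged_vol (j : nat) : R :=
  box_vol k (fun i => a j i - rho j) (fun i => b j i + rho j).

Lemma enlarged_vol_bounds j : 0 <= enlarged_vol j <= gap_bound j.
Proof.
  pose proof (rho_spec j) as [Hr Hb]. split.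
  - apply box_vol_nonneg. intros; pose proof (Hab j i); lra.
  - eapply Rle_trans; [|apply Hb]. right. apply rprod_ext; intros; ring.
Qed.

Lemma gap_bound_series : is_series gap_bound (l + eta / 2).
Proof.
  apply (is_series_plus (fun j => box_vol k (a j) (b j)) (fun j => eta / 4 * (/2) ^ j)).
  - apply is_series_Reals; auto.
  - replace (eta / 2) with (eta / 4 * / (1 - / 2)) by field. apply is_series_Reals, inf_sum_scal.
    apply is_series_Reals, is_series_geom. rewrite Rabs_pos_eq; lra.
Qed.

Lemma enlarged_vol_ex : ex_series enlarged_vol.
Proof.
  apply (ex_series_nonneg_le _ gap_bound); [apply enlarged_vol_bounds|].
  eexists; apply gap_bound_series.
Qed.

Definition inter_vol (al' be' : nat -> R) (j : nat) : R :=
  rprod k (fun i => Rmax 0 (Rmin (b j i + rho j) (be' i) - Rmax (a j i - rho j) (al' i))).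

Lemma inter_vol_bounds al' be' j : 0 <= inter_vol al' be' j <= enlarged_vol j.
Proof.
  unfold inter_vol, enlarged_vol, box_vol. split; [apply rprod_nonneg; intros; apply Rmax_l|].
  apply rprod_le. intros i Hi. split; [apply Rmax_l|].
  pose proof (rho_spec j); pose proof (Hab j i). unfold Rmax, Rmin; repeat destruct Rle_dec; lra.
Qed.

Lemma inter_vol_ex al' be' : ex_series (inter_vol al' be').
Proof.
  apply (ex_series_nonneg_le _ enlarged_vol); [apply inter_vol_bounds| apply enlarged_vol_ex].
Qed.

Definition bad_box (al' be' : nat -> R) : Prop :=
  Series (inter_vol al' be') < box_vol k al' be'.

Lemma bad_box_initial : bad_box al be.
Proof.
  unfold bad_box. apply Rle_lt_trans with (Series gap_bound).
  - apply Rle_trans with (Series enlarged_vol).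
    + apply Series_le; [apply inter_vol_bounds| apply enlarged_vol_ex].
    + apply Series_le; [apply enlarged_vol_bounds| eexists; apply gap_bound_series].
  - rewrite (is_series_unique _ _ gap_bound_series). unfold eta in *. lra.
Qed.

Lemma inter_len_split u v al' ga be' : u <= v -> al' <= ga <= be' ->
  Rmax 0 (Rmin v be' - Rmax u al') =
  Rmax 0 (Rmin v ga - Rmax u al') + Rmax 0 (Rmin v be' - Rmax u ga).
Proof. intros; unfold Rmax, Rmin; repeat destruct Rle_dec; lra. Qed.

Lemma bad_box_split al' be' i : (i < k)%nat -> (forall l0, (l0 < k)%nat -> al' l0 <= be' l0) ->
  bad_box al' be' ->
  bad_box al' (upd be' i ((al' i + be' i) / 2)) \/ bad_box (upd al' i ((al' i + be' i) / 2)) be'.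
Proof.
  intros Hi Hle HP. apply NNPP. intros Hno. apply not_or_and in Hno as [H1 H2].
  unfold bad_box in *. set (g := (al' i + be' i) / 2) in *. pose proof (Hle i Hi).
  assert (Hupd : forall (f : nat -> R) v i0, i0 <> i -> upd f i v i0 = f i0)
    by (intros; unfold upd; destruct Nat.eq_dec; [lia| auto]).
  assert (Hupd_i : forall (f : nat -> R) v, upd f i v i = v)
    by (intros; unfold upd; destruct Nat.eq_dec; [auto| lia]).
  assert (E1 : forall j,
    inter_vol al' be' j = inter_vol al' (upd be' i g) j + inter_vol (upd al' i g) be' j).
  { intros j. unfold inter_vol. apply (rprod_split k i); auto.
    - rewrite !Hupd_i. pose proof (rho_spec j); pose proof (Hab j i).
      apply inter_len_split; unfold g; lra.
    - intros i0 Hi0 Hne. rewrite !Hupd; auto. }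
  assert (E2 : box_vol k al' be' = box_vol k al' (upd be' i g) + box_vol k (upd al' i g) be').
  { unfold box_vol. apply (rprod_split k i); auto.
    - rewrite !Hupd_i. lra.
    - intros i0 Hi0 Hne. rewrite !Hupd; auto. }
  rewrite (Series_ext _ _ E1), Series_plus in HP; try apply inter_vol_ex. lra.
Qed.

Lemma box_cover_contradiction : False.
Proof.
  destruct (bisect k bad_box al be Hk Halbe bad_box_initial bad_box_split) as [x Hx].
  set (x' := fun i => if Nat.ltb i k then x i else 0).
  assert (Hx'i : forall i, (i < k)%nat -> x' i = x i)
    by (intros i Hi; unfold x'; destruct (Nat.ltb_spec0 i k); [auto| lia]).
  destruct (Hcov x') as [j Hj].
  { intros i Hi. unfold x'. destruct (Nat.ltb_spec0 i k); [lia| auto]. }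
  { intros i Hi. destruct (Hx 0%nat) as [a0 [b0 [_ H0]]]. destruct (H0 i Hi) as [? [_ [? ?]]].
    rewrite Hx'i; auto. lra. }
  destruct (rho_spec j) as [Hrho _].
  destruct (exists_pow2 (rsum k (fun i => be i - al i)) (rho j) Hrho) as [q Hq].
  destruct (Hx q) as [aq [bq [HPq Hq2]]].
  (* The q-th bad box lies inside the enlargement of box j. *)
  assert (Hw : inter_vol aq bq j = box_vol k aq bq).
  { unfold inter_vol, box_vol. apply rprod_ext. intros i Hi. destruct (Hq2 i Hi) as [A [B _]].
    specialize (Hj i Hi). rewrite Hx'i in Hj by auto.
    assert ((be i - al i) / 2 ^ q <= rsum k (fun i => be i - al i) / 2 ^ q).
    { apply Rmult_le_compat_r; [left; apply Rinv_0_lt_compat, pow_lt; lra|].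
      apply (rsum_ge_term k (fun i => be i - al i)); auto.
      intros i0 Hi0; specialize (Halbe i0 Hi0); lra. }
    unfold Rmax, Rmin; repeat destruct Rle_dec; lra. }
  unfold bad_box in HPq.
  pose proof (series_ge_term (inter_vol aq bq) j
    (fun n => proj1 (inter_vol_bounds aq bq n)) (inter_vol_ex aq bq)).
  lra.
Qed.
End BoxLowerBound.

Lemma measure_ge_box k K al be v : (0 < k)%nat -> (forall i, (i < k)%nat -> al i <= be i) ->
  (forall x, inVk k x -> (forall i, (i < k)%nat -> al i <= x i <= be i) -> K x) ->
  lebesgue_measure k K v -> box_vol k al be <= v.
Proof.
  intros Hk Hle HK [_ B]. apply B. intros l [a [b [C1 [C2 C3]]]].
  destruct (Rle_or_lt (box_vol k al be) l) as [|Hlt]; auto. exfalso.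
  apply (box_cover_contradiction k Hk al be Hle a b C1) with l; auto.
Qed.

Lemma measure_pos_of_cube k K r v : (0 < k)%nat -> 0 < r ->
  (forall x, inVk k x -> (forall i, (i < k)%nat -> Rabs (x i) <= r) -> K x) ->
  lebesgue_measure k K v -> 0 < v.
Proof.
  intros Hk Hr HK Hv. apply Rlt_le_trans with (box_vol k (fun _ => - r) (fun _ => r)).
  - unfold box_vol. rewrite (rprod_ext k _ (fun _ => 2 * r)), rprod_const by (intros; lra).
    apply pow_lt; lra.
  - apply (measure_ge_box k K); auto; [intros; lra|]. intros x Hx Hb. apply HK; auto.
    intros; apply Rabs_le; auto.
Qed.

(** ** Thin slabs have small measure

    The slab { x in [-L, L]^k : |w . x| <= eps } with w_j <> 0 is covered by
    N^(k-1) boxes: the coordinates other than j are located in a grid of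
    mesh h = 2L/N, which pins x_j to an interval of length ell around a
    centre determined by the grid cell; that interval is cut into N pieces
    so that every box is indexed by a base-N number J < N^k. *)

Section Slab.
Variables (k j N : nat) (w : nat -> R) (L eps : R).
Hypotheses (Hj : (j < k)%nat) (Hwj : w j <> 0) (HL : 0 < L) (Heps : 0 <= eps) (HN : (0 < N)%nat).

Let h := 2 * L / INR N.
Let ell := 2 * (eps + h * rsum k (fun l => Rabs (w l))) / Rabs (w j).

Lemma INRN_pos : 0 < INR N. Proof. apply lt_0_INR; auto. Qed.
Lemma h_pos : 0 < h. Proof. apply Rdiv_lt_0_compat; [lra| apply INRN_pos]. Qed.

Lemma ell_pos : 0 < ell.
Proof.
  pose proof (Rabs_pos_lt _ Hwj). apply Rdiv_lt_0_compat; auto.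
  assert (0 < h * rsum k (fun l => Rabs (w l))); [|lra].
  apply Rmult_lt_0_compat; [apply h_pos|]. eapply Rlt_le_trans; [apply (Rabs_pos_lt _ Hwj)|].
  apply (rsum_ge_term k (fun l => Rabs (w l)) j); auto. intros; apply Rabs_pos.
Qed.

(* Lower corner of grid cell M, with coordinate j set to 0, and the centre
   of the admissible x_j-interval for that cell. *)
Definition cell_base (M : nat -> nat) : nat -> R :=
  fun l => if Nat.eq_dec l j then 0 else - L + h * INR (M l).
Definition cell_center (M : nat -> nat) : R := - dot k w (cell_base M) / w j.

Definition digit (J l : nat) : nat := ((J / N ^ l) mod N)%nat.

(* Box J < N^k: the sides l <> j are the grid cells given by the digits of
   J, side j is the digit-indexed piece of the x_j-interval of that cell.
   Boxes with J >= N^k are degenerate points. *)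
Definition slab_lo (J l : nat) : R :=
  if Nat.ltb J (N ^ k) then
    (if Nat.eq_dec l j then cell_center (digit J) - ell / 2 + ell / INR N * INR (digit J l)
     else - L + h * INR (digit J l))
  else 0.
Definition slab_hi (J l : nat) : R :=
  slab_lo J l + (if Nat.ltb J (N ^ k) then (if Nat.eq_dec l j then ell / INR N else h) else 0).

Lemma slab_lo_le_hi J i : slab_lo J i <= slab_hi J i.
Proof.
  unfold slab_hi. pose proof h_pos; pose proof ell_pos; pose proof INRN_pos.
  assert (0 < ell / INR N) by (apply Rdiv_lt_0_compat; auto).
  destruct (Nat.ltb_spec0 J (N ^ k)); [destruct Nat.eq_dec|]; lra.
Qed.

Lemma slab_boxes_total :
  infinite_sum (fun J => box_vol k (slab_lo J) (slab_hi J)) ((2 * L) ^ (k - 1) * ell).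
Proof.
  pose proof INRN_pos.
  replace ((2 * L) ^ (k - 1) * ell)
    with (rsum (N ^ k) (fun J => box_vol k (slab_lo J) (slab_hi J))).
  { apply inf_sum_finite. intros J HJ. unfold box_vol, slab_hi.
    destruct (Nat.ltb_spec0 J (N ^ k)); [lia|].
    rewrite (rprod_ext k _ (fun _ => 0)), rprod_const by (intros; lra). apply pow_i; lia. }
  rewrite (rsum_ext _ _ (fun _ => h ^ (k - 1) * (ell / INR N))).
  - rewrite rsum_const, pow_INR.
    assert (E : INR N ^ k = INR N ^ (k - 1) * INR N)
      by (replace k with (S (k - 1)) at 1 by lia; simpl; ring).
    rewrite E.
    replace (2 * L) with (INR N * h) by (unfold h; field; lra). rewrite Rpow_mult_distr. field. lra.
  - intros J HJ. unfold box_vol. rewrite (rprod_one_diff k j _ h); auto.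
    + unfold slab_hi. destruct (Nat.ltb_spec0 J (N ^ k)); [|lia]. destruct (Nat.eq_dec j j); [|lia].
      f_equal; ring.
    + intros i Hi Hne. unfold slab_hi. destruct (Nat.ltb_spec0 J (N ^ k)); [|lia].
      destruct (Nat.eq_dec i j); [lia|]. ring.
Qed.

Lemma slab_near_center x M : Rabs (dot k w x) <= eps ->
  (forall l, (l < k)%nat -> l <> j -> INR (M l) * h <= x l + L <= INR (S (M l)) * h) ->
  Rabs (x j - cell_center M) <= ell / 2.
Proof.
  intros Hd HM. pose proof h_pos.
  set (z := cell_base M). set (r := fun l => if Nat.eq_dec l j then 0 else x l - z l).
  assert (Edot : dot k w x = dot k w z + dot k w r + w j * x j).
  { unfold dot. rewrite <- (rsum_single k j (w j * x j)), <- !rsum_plus by auto. apply rsum_ext.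
    intros l Hl. unfold r, z, cell_base. destruct (Nat.eq_dec l j); subst; ring. }
  assert (Hr : Rabs (dot k w r) <= h * rsum k (fun l => Rabs (w l))).
  { eapply Rle_trans; [apply dot_abs_le|]. rewrite <- rsum_scal. apply rsum_le. intros l Hl.
    rewrite (Rmult_comm h). apply Rmult_le_compat_l; [apply Rabs_pos|].
    unfold r, z, cell_base. destruct (Nat.eq_dec l j); [rewrite Rabs_R0; lra|].
    destruct (HM l Hl) as [A B]; auto. rewrite S_INR in B. rewrite Rabs_pos_eq; lra. }
  assert (E : w j * (x j - cell_center M) = dot k w x - dot k w r)
    by (unfold cell_center; fold z; rewrite Edot; field; auto).
  assert (Hbound :
    Rabs (w j) * Rabs (x j - cell_center M) <= eps + h * rsum k (fun l => Rabs (w l))).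
  { rewrite <- Rabs_mult, E. eapply Rle_trans; [apply Rabs_triang|]. rewrite Rabs_Ropp. lra. }
  pose proof (Rabs_pos_lt _ Hwj). apply (Rmult_le_reg_l (Rabs (w j))); auto.
  unfold ell. replace (Rabs (w j) * (2 * (eps + h * rsum k (fun l => Rabs (w l))) / Rabs (w j) / 2))
    with (eps + h * rsum k (fun l => Rabs (w l))) by (field; lra). lra.
Qed.

Lemma slab_boxes_cover x : inVk k x ->
  (forall i, (i < k)%nat -> - L <= x i <= L) -> Rabs (dot k w x) <= eps ->
  exists J, forall i, (i < k)%nat -> slab_lo J i <= x i <= slab_hi J i.
Proof.
  intros Hx Hb Hd. pose proof h_pos. pose proof INRN_pos. pose proof ell_pos.
  destruct (choice (fun l m => (l < k)%nat -> (m < N)%nat /\ INR m * h <= x l + L <= INR (S m) * h))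
    as [M HM].
  { intros l. destruct (Nat.ltb_spec0 l k) as [Hl|]; [|exists 0%nat; intros; lia].
    destruct (grid_cell N h (x l + L)) as [m Hm]; auto; [|exists m; auto].
    specialize (Hb l Hl). unfold h.
    replace (INR N * (2 * L / INR N)) with (2 * L) by (field; lra). lra. }
  pose proof (slab_near_center x M Hd ltac:(intros l0 Hl0 _; apply HM; auto)) as Hc.
  apply Rabs_le_between in Hc.
  destruct (grid_cell N (ell / INR N) (x j - cell_center M + ell / 2)) as [mj [Hmj1 Hmj2]]; auto.
  { apply Rdiv_lt_0_compat; auto. }
  { replace (INR N * (ell / INR N)) with ell by (field; lra). lra. }
  set (M' := fun l => if Nat.eq_dec l j then mj else M l).
  destruct (digits_enc_spec M' N k HN) as [HJ1 HJ2].
  { intros l Hl; unfold M'; destruct Nat.eq_dec; auto. apply HM; auto. }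
  exists (digits_enc M' N k). intros i Hi. unfold slab_hi, slab_lo.
  destruct (Nat.ltb_spec0 (digits_enc M' N k) (N ^ k)) as [_|]; [|lia].
  assert (Hcenter : cell_center (digit (digits_enc M' N k)) = cell_center M).
  { unfold cell_center. f_equal. f_equal. unfold dot. apply rsum_ext. intros l Hl.
    unfold cell_base, digit. destruct (Nat.eq_dec l j); auto. rewrite HJ2 by auto.
    unfold M'. destruct (Nat.eq_dec l j); [lia| auto]. }
  rewrite Hcenter. unfold digit. rewrite HJ2 by auto. unfold M'.
  destruct (Nat.eq_dec i j) as [->|].
  - rewrite S_INR in Hmj2. lra.
  - destruct (HM i Hi) as [_ [A B]]. rewrite S_INR in B. lra.
Qed.

Lemma slab_measure_le v :
  lebesgue_measure k
    (fun x => (forall i, (i < k)%nat -> - L <= x i <= L) /\ Rabs (dot k w x) <= eps) v ->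
  v <= (2 * L) ^ (k - 1) * (2 * (eps + 2 * L / INR N * rsum k (fun l => Rabs (w l))) / Rabs (w j)).
Proof.
  intros Hv. apply (measure_le_cover _ _ _ _ Hv). exists slab_lo, slab_hi.
  split; [intros; apply slab_lo_le_hi|]. split; [|apply slab_boxes_total].
  intros x Hx [Hb Hd]. apply slab_boxes_cover; auto.
Qed.
End Slab.

Section NormFacts.
Variables (k : nat) (p : (nat -> R) -> R).
Hypothesis Hp : is_norm k p.

Lemma norm_zero : p zerov = 0.
Proof.
  destruct Hp as [_ [H _]]. pose proof (H 0 zerov (inVk_zero k)) as E.
  replace (fun i => 0 * zerov i) with zerov in E; [rewrite Rabs_R0 in E; lra|].
  apply functional_extensionality; intros; unfold zerov; ring.
Qed.

Lemma norm_nonneg x : inVk k x -> 0 <= p x.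
Proof.
  intros Hx. destruct Hp as [_ [H1 H2]].
  pose proof (H2 x (fun i => -1 * x i) Hx (inVk_scal k (-1) x Hx)) as E.
  rewrite H1 in E; auto. replace (fun i => x i + -1 * x i) with zerov in E.
  - rewrite norm_zero in E.
    replace (Rabs (-1)) with 1 in E by (unfold Rabs; destruct Rcase_abs; lra). lra.
  - apply functional_extensionality; intros; unfold zerov; ring.
Qed.

Lemma norm_ev_bound x : inVk k x -> p x <= rsum k (fun j => Rabs (x j) * p (ev j)).
Proof.
  intros Hx. destruct Hp as [_ [H1 H2]].
  set (y := fun m i => if Nat.ltb i m then x i else 0).
  assert (Hy : forall m, inVk k (y m))
    by (intros m i Hi; unfold y; destruct (Nat.ltb_spec0 i m); auto).
  assert (Hpart : forall m, (m <= k)%nat -> p (y m) <= rsum m (fun j => Rabs (x j) * p (ev j))).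
  { induction m; intros Hm; simpl.
    - replace (y 0%nat) with zerov; [rewrite norm_zero; lra|].
      apply functional_extensionality; intros; unfold y; destruct (Nat.ltb_spec0 x0 0); [lia| auto].
    - replace (y (S m)) with (fun i => y m i + x m * ev m i).
      + eapply Rle_trans; [apply H2; auto; apply inVk_scal, inVk_ev; lia|].
        rewrite H1 by (apply inVk_ev; lia). pose proof (IHm ltac:(lia)); lra.
      + apply functional_extensionality; intros i. unfold y, ev.
        destruct (Nat.ltb_spec0 i m), (Nat.ltb_spec0 i (S m)), (Nat.eq_dec i m);
          try lia; subst; ring. }
  replace x with (y k) at 1; [apply Hpart; lia|].
  apply functional_extensionality; intros i. unfold y. destruct (Nat.ltb_spec0 i k); auto.
  rewrite Hx; auto; lia.
Qed.

Lemma norm_ball_cube : exists r, 0 < r /\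
  forall x, inVk k x -> (forall i, (i < k)%nat -> Rabs (x i) <= r) -> p x <= 1.
Proof.
  set (s := rsum k (fun j => p (ev j))).
  assert (Hs : 0 <= s) by (apply rsum_nonneg; intros; apply norm_nonneg, inVk_ev; auto).
  exists (/ (1 + s)). split; [apply Rinv_0_lt_compat; lra|]. intros x Hx Hb.
  eapply Rle_trans; [apply norm_ev_bound; auto|]. apply Rle_trans with (/ (1 + s) * s).
  - unfold s; rewrite <- rsum_scal. apply rsum_le; intros.
    apply Rmult_le_compat_r; auto. apply norm_nonneg, inVk_ev; auto.
  - apply (Rmult_le_reg_l (1 + s)); [lra|]. rewrite <- Rmult_assoc, Rinv_r; lra.
Qed.

Lemma norm_vol_pos v : (0 < k)%nat -> vol k p v -> 0 < v.
Proof.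
  intros Hk Hv. destruct norm_ball_cube as [r [Hr H]].
  apply (measure_pos_of_cube k (fun x => p x <= 1) r); auto.
Qed.

Lemma dual_nonneg w d : dual_norm k p w d -> 0 <= d.
Proof.
  intros [H _]. apply H. exists zerov. split; [apply inVk_zero|]. split.
  - rewrite norm_zero; lra.
  - rewrite dot_zero_l, Rabs_R0; auto.
Qed.

Lemma dual_bound w d : dual_norm k p w d -> forall x, inVk k x -> Rabs (dot k x w) <= d * p x.
Proof.
  intros Hd x Hx. pose proof (norm_nonneg x Hx) as Hpx. pose proof (dual_nonneg w d Hd) as Hd0.
  destruct Hp as [H0 [H1 H2]]. destruct (Req_dec (p x) 0) as [E|E].
  - replace x with zerov; [rewrite dot_zero_l, Rabs_R0, norm_zero; lra|].
    apply functional_extensionality; intros i; unfold zerov; symmetry; apply H0; auto.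
  - assert (Hpos : 0 < / p x) by (apply Rinv_0_lt_compat; lra).
    set (y := fun i => / p x * x i). assert (Hy : inVk k y) by (apply inVk_scal; auto).
    assert (Py : p y = 1) by (unfold y; rewrite H1, Rabs_pos_eq by (auto; lra); field; auto).
    destruct Hd as [Hd _].
    assert (Hdy : Rabs (dot k y w) <= d) by (apply Hd; exists y; repeat split; auto; lra).
    unfold y in Hdy. rewrite dot_scal_l, Rabs_mult, Rabs_pos_eq in Hdy by lra.
    apply (Rmult_le_compat_l (p x)) in Hdy; auto. rewrite <- Rmult_assoc, Rinv_r in Hdy; lra.
Qed.

(* p^*(w) > 0 when w <> 0: test against a small multiple of a coordinate vector. *)
Lemma dual_pos w d j : (j < k)%nat -> w j <> 0 -> dual_norm k p w d -> 0 < d.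
Proof.
  intros Hj Hw [Hd _]. destruct norm_ball_cube as [r [Hr H]].
  apply Rlt_le_trans with (Rabs (dot k (fun i => r * ev j i) w)).
  - rewrite dot_scal_l, dot_ev, Rabs_mult by auto. apply Rmult_lt_0_compat.
    + rewrite Rabs_pos_eq; lra.
    + apply Rabs_pos_lt; auto.
  - apply Hd. exists (fun i => r * ev j i). split; [apply inVk_scal, inVk_ev; auto|]. split; auto.
    apply H; [apply inVk_scal, inVk_ev; auto|].
    intros; unfold ev; destruct Nat.eq_dec; rewrite Rabs_pos_eq; lra.
Qed.

Lemma dual_zero w d : (forall l, (l < k)%nat -> w l = 0) -> dual_norm k p w d -> d = 0.
Proof.
  intros Hw Hd. pose proof (dual_nonneg w d Hd). destruct Hd as [_ H1].
  assert (d <= 0); [|lra]. apply H1.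
  intros t [x [_ [_ ->]]]. rewrite dot_zero_r, Rabs_R0; auto; lra.
Qed.
End NormFacts.

(** ** The bodies B_t and the norms q_c *)

Section Bodies.
Variables (k n : nat) (xi : nat -> nat -> R).
Hypothesis Hk : (0 < k)%nat.
Hypothesis Hspan : spans k n xi.

Definition xi_nonzero (i : nat) : Prop := exists l, (l < k)%nat /\ xi i l <> 0.

Lemma not_nonzero_dot i x : ~ xi_nonzero i -> dot k (xi i) x = 0.
Proof.
  intros H. rewrite dot_comm. apply dot_zero_r. intros l Hl.
  destruct (Req_dec (xi i l) 0); auto. exfalso; apply H; exists l; auto.
Qed.

Definition span_coef (j : nat) : nat -> R := epsilon (inhabits (fun _ => 0))
  (fun c => forall l, (l < k)%nat -> ev j l = rsum n (fun i => c i * xi i l)).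

Lemma coord_formula x j : inVk k x -> (j < k)%nat ->
  x j = rsum n (fun i => span_coef j i * dot k (xi i) x).
Proof.
  intros Hx Hj.
  assert (Hc : forall l, (l < k)%nat -> ev j l = rsum n (fun i => span_coef j i * xi i l)).
  { unfold span_coef. apply epsilon_spec. apply (proj2 Hspan), inVk_ev; auto. }
  rewrite <- (dot_ev k j x); auto. unfold dot.
  rewrite (rsum_ext k _ (fun l => rsum n (fun i => span_coef j i * xi i l * x l))).
  - rewrite rsum_swap. apply rsum_ext; intros. rewrite <- rsum_scal. apply rsum_ext; intros; ring.
  - intros l Hl. rewrite (Hc l Hl), Rmult_comm, <- rsum_scal. apply rsum_ext; intros; ring.
Qed.

Lemma exists_nonzero : exists i, (i < n)%nat /\ xi_nonzero i.
Proof.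
  apply NNPP; intros H. pose proof (coord_formula (ev 0) 0 (inVk_ev k 0 Hk) Hk) as E.
  rewrite rsum_zero in E; [unfold ev in E; simpl in E; lra|].
  intros i Hi. rewrite not_nonzero_dot; [ring|]. intros Hn; apply H; exists i; auto.
Qed.

Definition body (t : nat -> R) : (nat -> R) -> Prop :=
  fun x => forall i, (i < n)%nat -> Rabs (dot k (xi i) x) <= t i.

(* Sup-norm bound on B_t coming from the coordinate formula. *)
Definition body_bound (t : nat -> R) : R :=
  rsum k (fun j => rsum n (fun i => Rabs (span_coef j i) * t i)).

Lemma body_bound_mono t t' : (forall i, (i < n)%nat -> 0 <= t i <= t' i) ->
  0 <= body_bound t <= body_bound t'.
Proof.
  intros H. unfold body_bound. split.
  - apply rsum_nonneg; intros; apply rsum_nonneg; intros.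
    apply Rmult_le_pos; [apply Rabs_pos| apply H; auto].
  - apply rsum_le; intros; apply rsum_le; intros.
    apply Rmult_le_compat_l; [apply Rabs_pos| apply H; auto].
Qed.

Lemma body_bounded t x : (forall i, (i < n)%nat -> 0 <= t i) -> inVk k x -> body t x ->
  forall j, (j < k)%nat -> - body_bound t <= x j <= body_bound t.
Proof.
  intros Ht Hx HB j Hj. apply Rabs_le_between. rewrite (coord_formula x j Hx Hj).
  eapply Rle_trans; [apply rsum_abs|].
  apply Rle_trans with (rsum n (fun i => Rabs (span_coef j i) * t i)).
  - apply rsum_le; intros. rewrite Rabs_mult.
    apply Rmult_le_compat_l; [apply Rabs_pos| apply HB; auto].
  - apply (rsum_ge_term k (fun j => rsum n (fun i => Rabs (span_coef j i) * t i))); auto.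
    intros; apply rsum_nonneg; intros; apply Rmult_le_pos; auto; apply Rabs_pos.
Qed.

Lemma body_measure_exists t : (forall i, (i < n)%nat -> 0 <= t i) ->
  exists v, lebesgue_measure k (body t) v /\ v <= (2 * body_bound t) ^ k.
Proof.
  intros Ht. apply measure_exists_bounded; auto.
  - apply (body_bound_mono t t); intros; split; auto; lra.
  - intros x Hx HB. apply body_bounded; auto.
Qed.

Lemma body_dilate t lam : 0 < lam ->
  forall x, body (fun i => lam * t i) x <-> dilate lam (body t) x.
Proof.
  intros Hl x. unfold dilate, body.
  assert (E : forall i, dot k (xi i) (fun l => x l / lam) = / lam * dot k (xi i) x).
  { intros i. rewrite <- dot_scal_r. unfold dot; apply rsum_ext; intros; unfold Rdiv; ring. }
  assert (Hinv : 0 < / lam) by (apply Rinv_0_lt_compat; auto).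
  split; intros H i Hi; specialize (H i Hi); rewrite E, Rabs_mult, Rabs_pos_eq in * by lra.
  - apply (Rmult_le_reg_l lam); auto. rewrite <- Rmult_assoc, Rinv_r; lra.
  - apply (Rmult_le_compat_l lam) in H; [|lra]. rewrite <- Rmult_assoc, Rinv_r in H; lra.
Qed.

Definition qnorm (c : nat -> R) : (nat -> R) -> R :=
  fun x => rmaxn n (fun i => c i * Rabs (dot k (xi i) x)).

(* q_c is a norm as soon as c_i > 0 for every nonzero xi_i; definiteness
   follows from the coordinate formula. *)
Lemma qnorm_is_norm c : (forall i, (i < n)%nat -> 0 <= c i) ->
  (forall i, (i < n)%nat -> xi_nonzero i -> 0 < c i) -> is_norm k (qnorm c).
Proof.
  intros H0 H1. split; [|split].
  - intros x Hx Hq j. destruct (Nat.ltb_spec0 j k) as [Hj|Hj]; [|apply Hx, Nat.nlt_ge, Hj].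
    rewrite (coord_formula x j Hx Hj). apply rsum_zero. intros i Hi.
    destruct (classic (xi_nonzero i)) as [Hn|Hn]; [|rewrite not_nonzero_dot; auto; ring].
    assert (c i * Rabs (dot k (xi i) x) <= 0)
      by (rewrite <- Hq; apply (rmaxn_ge n (fun i => c i * Rabs (dot k (xi i) x))); auto).
    pose proof (H1 i Hi Hn). pose proof (Rabs_pos (dot k (xi i) x)).
    assert (Rabs (dot k (xi i) x) = 0) by nra.
    rewrite (Rabs_eq_0 _ H4); ring.
  - intros a x Hx. unfold qnorm. rewrite <- rmaxn_scal by apply Rabs_pos.
    apply rmaxn_ext; intros. rewrite dot_scal_r, Rabs_mult; ring.
  - intros x y Hx Hy. unfold qnorm.
    apply rmaxn_le; [apply Rplus_le_le_0_compat; apply rmaxn_nonneg|]. intros i Hi.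
    replace (fun i0 => x i0 + y i0) with (fun i0 => 1 * x i0 + 1 * y i0)
      by (apply functional_extensionality; intros; ring).
    rewrite dot_lin_r, !Rmult_1_l.
    eapply Rle_trans; [apply Rmult_le_compat_l; [auto| apply Rabs_triang]|].
    rewrite Rmult_plus_distr_l.
    apply Rplus_le_compat; apply (rmaxn_ge n (fun i => c i * Rabs (dot k (xi i) _))); auto.
Qed.

Definition recip (t : nat -> R) (i : nat) : R := if Rlt_dec 0 (t i) then / t i else 0.

Section Recip.
Variable t : nat -> R.
Hypothesis Ht0 : forall i, (i < n)%nat -> 0 <= t i.
Hypothesis Htnz : forall i, (i < n)%nat -> xi_nonzero i -> 0 < t i.

Lemma recip_nonneg i : 0 <= recip t i.
Proof. unfold recip; destruct Rlt_dec; [left; apply Rinv_0_lt_compat|]; lra. Qed.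

Lemma qnorm_recip_is_norm : is_norm k (qnorm (recip t)).
Proof.
  apply qnorm_is_norm; [intros; apply recip_nonneg|].
  intros i Hi Hn. unfold recip; destruct Rlt_dec; [apply Rinv_0_lt_compat; auto|].
  exfalso; apply n0, Htnz; auto.
Qed.

Lemma qnorm_recip_ball x : qnorm (recip t) x <= 1 <-> body t x.
Proof.
  split.
  - intros Hq i Hi. pose proof (rmaxn_ge n (fun i => recip t i * Rabs (dot k (xi i) x)) i Hi) as H.
    fold (qnorm (recip t) x) in H. cbv beta in H. destruct (Rlt_dec 0 (t i)) as [Hti|Hti].
    + assert (Ec : recip t i = / t i) by (unfold recip; destruct Rlt_dec; [auto| lra]).
      rewrite Ec in H. apply (Rmult_le_reg_l (/ t i)); [apply Rinv_0_lt_compat; auto|].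
      rewrite Rinv_l; lra.
    + assert (~ xi_nonzero i) by (intros Hn; apply Hti, Htnz; auto).
      rewrite not_nonzero_dot, Rabs_R0; auto.
  - intros HB. apply rmaxn_le; [lra|]. intros i Hi. unfold recip.
    destruct (Rlt_dec 0 (t i)); [|lra].
    apply Rle_trans with (/ t i * t i); [|rewrite Rinv_l; lra].
    apply Rmult_le_compat_l; [left; apply Rinv_0_lt_compat; auto| apply HB; auto].
Qed.

Lemma qnorm_recip_dual i : (i < n)%nat ->
  exists d, dual_norm k (qnorm (recip t)) (xi i) d /\ 0 <= d <= t i.
Proof.
  intros Hi.
  set (E := fun s => exists x, inVk k x /\ qnorm (recip t) x <= 1 /\ s = Rabs (dot k x (xi i))).
  assert (HE : forall s, E s -> s <= t i)
    by (intros s [x [Hx [Hq ->]]]; rewrite dot_comm; apply qnorm_recip_ball; auto).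
  assert (H0 : E 0).
  { exists zerov. split; [apply inVk_zero|]. rewrite dot_zero_l, Rabs_R0. split; auto.
    apply qnorm_recip_ball. intros j Hj. rewrite dot_comm, dot_zero_l, Rabs_R0; auto. }
  destruct (completeness E) as [d Hd]; [exists (t i); auto| exists 0; auto|].
  exists d. split; [exact Hd|]. split; [apply Hd; auto|]. apply Hd. intros s Hs; apply HE; auto.
Qed.
End Recip.
End Bodies.

(** ** The volume of B_t on the simplex and its maximiser *)

Section VolumeOnSimplex.
Variables (k n : nat) (xi : nat -> nat -> R).
Hypothesis Hk : (0 < k)%nat.
Hypothesis Hspan : spans k n xi.

Definition simplex (t : nat -> R) : Prop :=
  (forall i, (i < n)%nat -> 0 <= t i) /\
  (forall i, (i < n)%nat -> ~ xi_nonzero k xi i -> t i = 0) /\ rsum n t = 1.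

Definition bvol (t : nat -> R) : R := epsilon (inhabits 0) (lebesgue_measure k (body k n xi t)).

Lemma bvol_spec t : (forall i, (i < n)%nat -> 0 <= t i) ->
  lebesgue_measure k (body k n xi t) (bvol t).
Proof.
  intros Ht. unfold bvol. apply epsilon_spec.
  destruct (body_measure_exists k n xi Hk Hspan t Ht) as [v [Hv _]]. eauto.
Qed.

Lemma bvol_mono t t' : (forall i, (i < n)%nat -> 0 <= t i <= t' i) -> bvol t <= bvol t'.
Proof.
  intros H. apply (measure_mono k (body k n xi t) (body k n xi t')).
  - intros x _ HB i Hi. eapply Rle_trans; [apply HB| apply H]; auto.
  - apply bvol_spec; intros; apply H; auto.
  - apply bvol_spec; intros i Hi; specialize (H i Hi); lra.
Qed.

Lemma bvol_dilate t lam : (forall i, (i < n)%nat -> 0 <= t i) -> 0 < lam ->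
  bvol (fun i => lam * t i) = lam ^ k * bvol t.
Proof.
  intros Ht Hl. apply (measure_unique k (body k n xi (fun i => lam * t i))).
  - apply bvol_spec. intros; apply Rmult_le_pos; auto; lra.
  - apply (measure_ext k (dilate lam (body k n xi t))).
    + intros x _; symmetry; apply body_dilate; auto.
    + apply measure_dilate, bvol_spec; auto.
Qed.

Lemma simplex_le1 t : simplex t -> forall i, (i < n)%nat -> 0 <= t i <= 1.
Proof. intros [H1 [_ H3]] i Hi. split; auto. rewrite <- H3. apply rsum_ge_term; auto. Qed.

Let A : R := body_bound k n xi (fun _ => 1).

Lemma simplex_body_cube t x : simplex t -> inVk k x -> body k n xi t x ->
  forall j, (j < k)%nat -> - A <= x j <= A /\ 0 <= A.
Proof.
  intros Hs Hx HB j Hj. pose proof (simplex_le1 t Hs) as H1.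
  pose proof (body_bound_mono k n xi t (fun _ => 1) H1).
  pose proof (body_bounded k n xi Hspan t x (fun i Hi => proj1 (H1 i Hi)) Hx HB j Hj).
  unfold A. lra.
Qed.

Lemma bvol_simplex_bound t : simplex t -> bvol t <= (2 * A) ^ k.
Proof.
  intros Hs. pose proof (simplex_le1 t Hs) as H1.
  destruct (body_measure_exists k n xi Hk Hspan t) as [v [Hv Hvb]];
    [exact (fun i Hi => proj1 (H1 i Hi))|].
  rewrite (measure_unique _ _ _ _ (bvol_spec t (fun i Hi => proj1 (H1 i Hi))) Hv).
  eapply Rle_trans; eauto. pose proof (body_bound_mono k n xi t (fun _ => 1) H1).
  apply pow_incr. unfold A. lra.
Qed.

Lemma bvol_pos t tau : 0 < tau -> (forall i, (i < n)%nat -> 0 <= t i) ->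
  (forall i, (i < n)%nat -> xi_nonzero k xi i -> tau <= t i) -> 0 < bvol t.
Proof.
  intros Htau Ht Htau_t.
  set (Xi := rsum n (fun i => rsum k (fun l => Rabs (xi i l)))).
  assert (HXi : forall i, (i < n)%nat -> 0 <= rsum k (fun l => Rabs (xi i l)) <= Xi).
  { intros i Hi. assert (H0 : forall i, 0 <= rsum k (fun l => Rabs (xi i l)))
      by (intros; apply rsum_nonneg; intros; apply Rabs_pos).
    split; auto. apply (rsum_ge_term n (fun i => rsum k (fun l => Rabs (xi i l)))); auto. }
  assert (HXi0 : 0 <= Xi) by (apply rsum_nonneg; intros; apply rsum_nonneg; intros; apply Rabs_pos).
  set (r := tau / (1 + Xi)). assert (Hr : 0 < r) by (apply Rdiv_lt_0_compat; lra).
  apply (measure_pos_of_cube k (body k n xi t) r); auto; [|apply bvol_spec; auto].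
  intros x Hx Hb i Hi. destruct (classic (xi_nonzero k xi i)) as [Hn|Hn];
    [|rewrite not_nonzero_dot, Rabs_R0; auto].
  rewrite dot_comm. eapply Rle_trans; [apply dot_abs_le|].
  apply Rle_trans with (r * Xi).
  - apply Rle_trans with (r * rsum k (fun l => Rabs (xi i l)));
      [|apply Rmult_le_compat_l; [lra| apply HXi; auto]].
    rewrite <- rsum_scal. apply rsum_le; intros l Hl.
    apply Rmult_le_compat_r; [apply Rabs_pos| apply Hb; auto].
  - apply Rle_trans with tau; [|apply Htau_t; auto]. unfold r.
    replace (tau / (1 + Xi) * Xi) with (tau * (Xi / (1 + Xi))) by (field; lra).
    rewrite <- (Rmult_1_r tau) at 2. apply Rmult_le_compat_l; [lra|].
    apply (Rmult_le_reg_r (1 + Xi)); [lra|]. unfold Rdiv; rewrite Rmult_assoc, Rinv_l; lra.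
Qed.

(* Uniform weights on the nonzero xi_i give a point of the simplex with V > 0. *)
Lemma exists_simplex_pos_volume : exists t0, simplex t0 /\ 0 < bvol t0.
Proof.
  set (w := fun i => if excluded_middle_informative (xi_nonzero k xi i) then 1 else 0).
  assert (Hw : forall i, 0 <= w i) by (intros; unfold w; destruct excluded_middle_informative; lra).
  destruct (exists_nonzero k n xi Hk Hspan) as [i0 [Hi0 Hnz0]].
  assert (HC : 1 <= rsum n w).
  { replace 1 with (w i0) by (unfold w; destruct excluded_middle_informative; tauto).
    apply rsum_ge_term; auto. }
  set (t0 := fun i => / rsum n w * w i).
  assert (Hinv : 0 < / rsum n w) by (apply Rinv_0_lt_compat; lra).
  assert (Hs : simplex t0).
  { split; [|split].
    - intros; unfold t0; apply Rmult_le_pos; auto; lra.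
    - intros i Hi Hn; unfold t0, w; destruct excluded_middle_informative; [tauto| ring].
    - unfold t0. rewrite rsum_scal. field; lra. }
  exists t0; split; auto. apply (bvol_pos t0 (/ rsum n w)); auto; [apply Hs|].
  intros i Hi Hn. unfold t0, w. destruct excluded_middle_informative; [lra| tauto].
Qed.

(* If xi_i <> 0 and t_i is small, B_t lies in a thin slab orthogonal to xi_i,
   so V(t) is small. *)
Lemma bvol_small_single i eps : (i < n)%nat -> xi_nonzero k xi i -> 0 < eps ->
  exists delta, 0 < delta /\ forall t, simplex t -> t i < delta -> bvol t <= eps.
Proof.
  intros Hi [l [Hl Hxl]] He.
  set (L := A + 1). set (Xs := rsum k (fun l => Rabs (xi i l))).
  assert (HXs : 0 <= Xs) by (apply rsum_nonneg; intros; apply Rabs_pos).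
  assert (Hax : 0 < Rabs (xi i l)) by (apply Rabs_pos_lt; auto).
  assert (HL : 0 < L).
  { assert (Hone : forall i, (i < n)%nat -> 0 <= 1 <= 1) by (intros; lra).
    pose proof (body_bound_mono k n xi _ _ Hone). unfold L, A. lra. }
  set (C := (2 * L) ^ (k - 1) * 2 / Rabs (xi i l)).
  assert (HC : 0 < C)
    by (apply Rdiv_lt_0_compat; auto; apply Rmult_lt_0_compat; [apply pow_lt|]; lra).
  set (delta := eps / (2 * C)). assert (Hd : 0 < delta) by (apply Rdiv_lt_0_compat; lra).
  destruct (INR_archimed delta (2 * L * Xs + 1)) as [N HN]; [lra|].
  assert (HN0 : (0 < N)%nat) by (destruct N; [simpl in HN; nra| lia]).
  assert (HNp : 0 < INR N) by (apply lt_0_INR; auto).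
  exists delta; split; auto. intros t Ht Hti.
  destruct (measure_exists_bounded k
    (fun x => (forall j, (j < k)%nat -> - L <= x j <= L) /\ Rabs (dot k (xi i) x) <= delta) L)
    as [vs [Hvs _]]; auto; try lra; [intros x _ [H1 _]; auto|].
  apply Rle_trans with vs.
  - eapply (measure_mono k (body k n xi t)); [| apply bvol_spec, Ht | exact Hvs].
    intros x Hx HB. split.
    + intros j Hj. pose proof (simplex_body_cube t x Ht Hx HB j Hj). unfold L; lra.
    + eapply Rle_trans; [apply HB; auto| lra].
  - eapply Rle_trans;
      [apply (slab_measure_le k l N (xi i) L delta Hl Hxl HL ltac:(lra) HN0 vs Hvs)|].
    fold Xs.
    replace ((2 * L) ^ (k - 1) * (2 * (delta + 2 * L / INR N * Xs) / Rabs (xi i l)))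
      with (C * (delta + 2 * L / INR N * Xs)) by (unfold C; field; lra).
    assert (2 * L / INR N * Xs <= delta).
    { replace (2 * L / INR N * Xs) with ((2 * L * Xs) / INR N) by (field; lra).
      apply (Rmult_le_reg_r (INR N)); auto. unfold Rdiv; rewrite Rmult_assoc, Rinv_l; lra. }
    apply Rle_trans with (C * (2 * delta)); [apply Rmult_le_compat_l; lra|].
    unfold delta. right; field; lra.
Qed.

Lemma bvol_small eps : 0 < eps -> exists delta, 0 < delta /\
  forall i, (i < n)%nat -> xi_nonzero k xi i -> forall t, simplex t -> t i < delta -> bvol t <= eps.
Proof.
  intros He. apply (common_delta n (fun i delta => xi_nonzero k xi i ->
    forall t, simplex t -> t i < delta -> bvol t <= eps)).
  - intros i Hi. destruct (classic (xi_nonzero k xi i)) as [Hn|Hn]; [|exists 1; split; [lra| tauto]].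
    destruct (bvol_small_single i eps Hi Hn He) as [d [Hd H]]. exists d; split; auto.
  - intros i d d' Hq [Hd' Hle] Hn t Ht Hti. apply Hq; auto. lra.
Qed.

(* If t is close to x relative to a lower bound delta of x on the nonzero
   xi_i, then t <= (1 + e) x, so V(t) <= (1 + e)^k V(x). *)
Lemma bvol_near_le x t delta e : 0 < delta -> 0 <= e -> simplex x -> simplex t ->
  (forall i, (i < n)%nat -> xi_nonzero k xi i -> delta <= x i) ->
  (forall i, (i < n)%nat -> Rabs (t i - x i) <= e * delta) ->
  bvol t <= (1 + e) ^ k * bvol x.
Proof.
  intros Hd He Hx Ht Hxd Htx. rewrite <- bvol_dilate; [|apply Hx| lra].
  apply bvol_mono. intros i Hi. split; [apply Ht; auto|].
  destruct (classic (xi_nonzero k xi i)) as [Hn|Hn].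
  - specialize (Htx i Hi). apply Rabs_le_between in Htx. specialize (Hxd i Hi Hn). nra.
  - rewrite (proj1 (proj2 Ht) i Hi Hn), (proj1 (proj2 Hx) i Hi Hn). lra.
Qed.

Lemma cluster_in_simplex u x : (forall m, simplex (u m)) -> cluster_of n u x -> simplex x.
Proof.
  intros Hu Hx. split; [|split].
  - intros i Hi. apply (cluster_coord_ge n u x i 0); auto. intros; apply Hu; auto.
  - intros i Hi Hn. apply (zero_by_eps (x i) 1); [lra|]. intros eta He.
    destruct (Hx eta He 0%nat) as [m [_ Hm]]. specialize (Hm i Hi).
    rewrite (proj1 (proj2 (Hu m)) i Hi Hn), Rabs_minus_sym, Rminus_0_r in Hm. lra.
  - assert (rsum n x - 1 = 0); [|lra]. apply (zero_by_eps _ (INR n)); [apply pos_INR|].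
    intros eta He. destruct (Hx eta He 0%nat) as [m [_ Hm]].
    rewrite <- (proj2 (proj2 (Hu m))), <- rsum_minus, <- rsum_const.
    eapply Rle_trans; [apply rsum_abs|]. apply rsum_le. intros i Hi.
    rewrite Rabs_minus_sym; auto.
Qed.

Lemma bvol_cluster_ge sup u x delta : 0 <= sup -> 0 < delta ->
  (forall m, simplex (u m) /\ sup - sup / (2 * INR (S m)) < bvol (u m)) ->
  cluster_of n u x -> simplex x -> (forall i, (i < n)%nat -> xi_nonzero k xi i -> delta <= x i) ->
  sup <= bvol x.
Proof.
  intros Hsup Hd Hu Hx Hxs Hxd. apply Rle_plus_epsilon. intros eps Heps.
  assert (HVx : 0 <= bvol x) by (eapply measure_nonneg, bvol_spec, Hxs).
  assert (HK2 : 0 < 2 ^ k) by (apply pow_lt; lra).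
  set (e := Rmin 1 (eps / (2 * 2 ^ k * (bvol x + 1)))).
  assert (He : 0 < e) by (apply Rmin_glb_lt; [lra| apply Rdiv_lt_0_compat; nra]).
  assert (He1 : e <= 1) by apply Rmin_l.
  assert (He2 : e * 2 ^ k * bvol x <= eps / 2).
  { apply Rle_trans with (eps / (2 * 2 ^ k * (bvol x + 1)) * 2 ^ k * bvol x).
    - apply Rmult_le_compat_r; auto. apply Rmult_le_compat_r; [lra| apply Rmin_r].
    - replace (eps / (2 * 2 ^ k * (bvol x + 1)) * 2 ^ k * bvol x)
        with (eps / 2 * (bvol x / (bvol x + 1))) by (field; lra).
      rewrite <- (Rmult_1_r (eps / 2)) at 2. apply Rmult_le_compat_l; [lra|].
      apply (Rmult_le_reg_r (bvol x + 1)); [lra|]. unfold Rdiv; rewrite Rmult_assoc, Rinv_l; lra. }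
  destruct (INR_archimed eps sup Heps) as [N HN].
  destruct (Hx (e * delta) ltac:(nra) N) as [m [Hm Hum]].
  destruct (Hu m) as [Hum_s Hum_v].
  assert (Hgap : sup / (2 * INR (S m)) <= eps / 2).
  { rewrite S_INR. assert (INR N <= INR m) by (apply le_INR; lia). pose proof (pos_INR m).
    apply (Rmult_le_reg_r (2 * (INR m + 1))); [lra|].
    replace (sup / (2 * (INR m + 1)) * (2 * (INR m + 1))) with sup by (field; lra). nra. }
  pose proof (bvol_near_le x (u m) delta e Hd ltac:(lra) Hxs Hum_s Hxd Hum).
  pose proof (pow_bern e k ltac:(lra)).
  assert ((1 + e) ^ k * bvol x <= (1 + e * 2 ^ k) * bvol x) by (apply Rmult_le_compat_r; auto).
  lra.
Qed.

Lemma exists_maximiser : exists ts, simplex ts /\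
  (forall i, (i < n)%nat -> xi_nonzero k xi i -> 0 < ts i) /\
  forall t, simplex t -> bvol t <= bvol ts.
Proof.
  destruct exists_simplex_pos_volume as [t0 [Ht0 HV0]].
  destruct (completeness (fun v => exists t, simplex t /\ v = bvol t)) as [sup [Hsup1 Hsup2]].
  { exists ((2 * A) ^ k). intros v [t [Ht ->]]. apply bvol_simplex_bound; auto. }
  { exists (bvol t0), t0; auto. }
  assert (Hsup : 0 < sup)
    by (apply Rlt_le_trans with (bvol t0); auto; apply Hsup1; exists t0; auto).
  destruct (choice (fun m t => simplex t /\ sup - sup / (2 * INR (S m)) < bvol t)) as [u Hu].
  { intros m. assert (Hg : 0 < sup / (2 * INR (S m))).
    { apply Rdiv_lt_0_compat; auto. pose proof (lt_0_INR (S m) ltac:(lia)). lra. }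
    apply NNPP; intros H. assert (sup <= sup - sup / (2 * INR (S m))); [|lra].
    apply Hsup2. intros v [t [Ht ->]]. apply Rnot_lt_le. intros Hlt. apply H. exists t; auto. }
  (* near-maximisers stay away from the faces t_i = 0 of nonzero xi_i *)
  destruct (bvol_small (sup / 2)) as [delta [Hdelta Hsmall]]; [lra|].
  assert (Hud : forall m i, (i < n)%nat -> xi_nonzero k xi i -> delta <= u m i).
  { intros m i Hi Hn. apply Rnot_lt_le; intros Hlt. destruct (Hu m) as [Hs Hv].
    pose proof (Hsmall i Hi Hn (u m) Hs Hlt).
    assert (sup / (2 * INR (S m)) <= sup / 2); [|lra].
    apply Rmult_le_compat_l; [lra|]. apply Rinv_le_contravar; [lra|].
    pose proof (le_INR 1 (S m) ltac:(lia)). simpl in *. lra. }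
  destruct (cluster_point n u) as [x Hx]; [intros m i Hi; apply simplex_le1; [apply Hu| exact Hi]|].
  assert (Hxs : simplex x) by (apply (cluster_in_simplex u); auto; intros; apply Hu).
  assert (Hxd : forall i, (i < n)%nat -> xi_nonzero k xi i -> delta <= x i)
    by (intros i Hi Hn; apply (cluster_coord_ge n u x i); auto).
  exists x. split; auto. split; [intros i Hi Hn; specialize (Hxd i Hi Hn); lra|].
  intros t Ht. apply Rle_trans with sup; [apply Hsup1; exists t; auto|].
  apply (bvol_cluster_ge sup u x delta); auto; lra.
Qed.
End VolumeOnSimplex.

(** ** Optimality of the norm attached to the maximiser *)

(* The unit ball of p lies in B_d, where d_i = p^*(xi_i). *)
Lemma vol_le_bvol k n xi p d v : (0 < k)%nat -> spans k n xi -> is_norm k p ->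
  (forall i, (i < n)%nat -> dual_norm k p (xi i) (d i)) -> vol k p v -> v <= bvol k n xi d.
Proof.
  intros Hk Hspan Hp Hd Hv.
  apply (measure_mono k (fun x => p x <= 1) (body k n xi d)); auto.
  - intros x Hx Hpx i Hi. rewrite dot_comm. eapply Rle_trans; [eapply dual_bound; eauto|].
    pose proof (dual_nonneg k p Hp _ _ (Hd i Hi)). rewrite <- (Rmult_1_r (d i)) at 2.
    apply Rmult_le_compat_l; auto.
  - apply bvol_spec; auto. intros i Hi. eapply dual_nonneg; eauto.
Qed.

Definition root (k : nat) (v : R) : R := Rpower v (/ INR k).

Lemma root_pos k v : 0 < root k v.
Proof. apply exp_pos. Qed.

Section Optimality.
Variables (k n : nat) (xi : nat -> nat -> R).
Hypothesis Hk : (0 < k)%nat.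
Hypothesis Hspan : spans k n xi.
Variable ts : nat -> R.
Hypothesis Hts : simplex k n xi ts.
Hypothesis Hts_pos : forall i, (i < n)%nat -> xi_nonzero k xi i -> 0 < ts i.
Hypothesis Hts_max : forall t, simplex k n xi t -> bvol k n xi t <= bvol k n xi ts.


Lemma bvol_ts_pos : 0 < bvol k n xi ts.
Proof.
  destruct (exists_simplex_pos_volume k n xi Hk Hspan) as [t0 [Ht0 HV0]].
  apply Rlt_le_trans with (bvol k n xi t0); auto.
Qed.

Lemma SH_lower_bound p s : is_norm k p -> SH k n xi p s -> / root k (bvol k n xi ts) <= s.
Proof.
  intros Hp [d [v [Hd [Hv ->]]]].
  assert (Hv0 : 0 < v) by (eapply norm_vol_pos; eauto).
  assert (Hd0 : forall i, (i < n)%nat -> 0 <= d i) by (intros; eapply dual_nonneg; eauto).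
  destruct (exists_nonzero k n xi Hk Hspan) as [i0 [Hi0 [l0 [Hl0 Hxl0]]]].
  set (T := rsum n d).
  assert (HT : 0 < T).
  { apply Rlt_le_trans with (d i0); [eapply dual_pos; eauto| apply rsum_ge_term; auto]. }
  set (t := fun i => / T * d i).
  assert (Ht : simplex k n xi t).
  { split; [|split].
    - intros; unfold t; apply Rmult_le_pos; auto; left; apply Rinv_0_lt_compat; auto.
    - intros i Hi Hn. unfold t. rewrite (dual_zero k p Hp (xi i) (d i)); auto; [ring|].
      intros l Hl. apply NNPP; intros Hne. apply Hn. exists l; auto.
    - unfold t. rewrite rsum_scal. fold T. field; lra. }
  (* vol(p) <= V(d) = T^k V(d / T) <= T^k V(ts) *)
  assert (Hvol : v <= T ^ k * bvol k n xi ts).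
  { eapply Rle_trans; [apply (vol_le_bvol k n xi p d v); auto|].
    replace d with (fun i => T * t i)
      by (apply functional_extensionality; intros; unfold t; field; lra).
    rewrite bvol_dilate; auto; [|apply Ht].
    apply Rmult_le_compat_l; [left; apply pow_lt; auto| apply Hts_max; auto]. }
  assert (HVs := bvol_ts_pos).
  assert (Hroot : root k v <= T * root k (bvol k n xi ts)).
  { unfold root. rewrite <- (Rpower_pow_inv k T Hk HT).
    rewrite Rpower_mult_distr by (auto; apply pow_lt; auto).
    apply Rle_Rpower_l; [left; apply Rinv_0_lt_compat, lt_0_INR; auto| lra]. }
  change (/ root k (bvol k n xi ts) <= T / root k v).
  pose proof (root_pos k v). pose proof (root_pos k (bvol k n xi ts)).
  set (Rv := root k v) in *. set (Rts := root k (bvol k n xi ts)) in *.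
  replace (/ Rts) with (T / (T * Rts)) by (field; lra).
  unfold Rdiv. apply Rmult_le_compat_l; [lra|]. apply Rinv_le_contravar; auto.
Qed.

Lemma maximiser_SH : exists m, SH k n xi (qnorm k n xi (recip ts)) m /\ 0 < m /\
  m <= / root k (bvol k n xi ts).
Proof.
  set (q := qnorm k n xi (recip ts)).
  assert (Hq : is_norm k q) by (apply qnorm_recip_is_norm; auto).
  destruct (choice (fun i d => (i < n)%nat -> dual_norm k q (xi i) d /\ 0 <= d <= ts i))
    as [dq Hdq].
  { intros i. destruct (Nat.ltb_spec0 i n) as [Hi|Hi]; [|exists 0; intros; lia].
    destruct (qnorm_recip_dual k n xi ts (proj1 Hts) Hts_pos i Hi) as [d Hd]. exists d; auto. }
  assert (HVq : vol k q (bvol k n xi ts)).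
  { apply (measure_ext k (body k n xi ts)).
    - intros x _. symmetry. apply qnorm_recip_ball; [apply Hts| exact Hts_pos].
    - apply bvol_spec; auto. apply Hts. }
  assert (HVs := bvol_ts_pos).
  pose proof (root_pos k (bvol k n xi ts)) as Hroot.
  exists (rsum n dq / root k (bvol k n xi ts)). split; [|split].
  - exists dq, (bvol k n xi ts). split; auto. intros; apply Hdq; auto.
  - destruct (exists_nonzero k n xi Hk Hspan) as [i0 [Hi0 [l0 [Hl0 Hxl0]]]].
    apply Rdiv_lt_0_compat; auto. apply Rlt_le_trans with (dq i0).
    + apply (dual_pos k q Hq (xi i0) (dq i0) l0); auto. apply Hdq; auto.
    + apply rsum_ge_term; auto. intros; apply Hdq; auto.
  - (* sum_i q^*(xi_i) <= sum_i ts_i = 1 *)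
    unfold Rdiv. rewrite <- (Rmult_1_l (/ root k _)) at 2.
    apply Rmult_le_compat_r; [left; apply Rinv_0_lt_compat; auto|].
    destruct Hts as [_ [_ <-]]. apply rsum_le. intros; apply Hdq; auto.
Qed.
End Optimality.

Theorem mainTheorem16 (k n : nat) (xi : nat -> nat -> R) :
  (0 < k)%nat ->
  spans k n xi ->
  exists m : R,
    is_glb (fun s => exists p, is_norm k p /\ SH k n xi p s) m /\
    0 < m /\
    exists c : nat -> R,
      (forall i, (i < n)%nat -> 0 <= c i) /\
      is_norm k (fun x => rmaxn n (fun i => c i * Rabs (dot k (xi i) x))) /\
      SH k n xi (fun x => rmaxn n (fun i => c i * Rabs (dot k (xi i) x))) m.
Proof.
  intros Hk Hspan.
  destruct (exists_maximiser k n xi Hk Hspan) as [ts [Hts [Hpos Hmax]]].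
  destruct (maximiser_SH k n xi Hk Hspan ts Hts Hpos Hmax) as [m [HSH [Hm Hm_le]]].
  exists m. split; [split|split; auto].
  - (* m is a lower bound: m <= V(ts)^(-1/k) <= SH(p) *)
    intros s [p [Hp Hs]]. eapply Rle_trans; [apply Hm_le|].
    apply (SH_lower_bound k n xi Hk Hspan ts Hmax p s Hp Hs).
  -
    intros b Hb. apply Hb. exists (qnorm k n xi (recip ts)). split; auto.
    apply qnorm_recip_is_norm; auto.
  - exists (recip ts). split; [intros; apply recip_nonneg|]. split; auto.
    apply qnorm_recip_is_norm; auto.
Qed.
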